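(* Let $1>\epsilon'\ge\epsilon>0$ and $C,D>0$, and let $\phi:U_C^\epsilon\to\mathbb{C}$ be holomorphic. Assume that either $\epsilon'>\epsilon$, or that $\epsilon'=\epsilon$ and $D>C$. (1) Let $r\in\mathbb{R}$ be such that $\phi(z)/e^{-rz}\to0$ as $|z|\to\infty$ in $U_C^\epsilon$. Then $\phi'(z)/e^{-rz}\to0$ as $|z|\to\infty$ in $U_D^{\epsilon'}$. (2) If $\phi$ is bounded in $U_C^\epsilon$, then $\phi'$ is bounded in $U_D^{\epsilon'}$.
   Context: $H(0)=\{z\in\mathbb{C}:\operatorname{Re}z>0\}$; for $C>0$ and $\epsilon\in(0,1)$, $U_C^\epsilon:=\phi_C^\epsilon(H(0))$ where $\phi_C^\epsilon(z)=z+C(1+z)^\epsilon$ (principal branch of the power function). *)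

From Stdlib Require Import Reals.
From Coquelicot Require Import Coquelicot.
Open Scope R_scope.

Definition Carg (w : C) : R :=
  let x := Re w in let y := Im w in
  if Rlt_dec 0 x then atan (y / x)
  else if Rlt_dec x 0 then
         (if Rle_dec 0 y then atan (y / x) + PI else atan (y / x) - PI)
  else if Rlt_dec 0 y then PI / 2
  else if Rlt_dec y 0 then - (PI / 2) else 0.

Definition Cexp (z : C) : C := (exp (Re z) * cos (Im z), exp (Re z) * sin (Im z)).
Definition CLog (w : C) : C := (ln (Cmod w), Carg w).

(* Principal branch of the power w^a (with 0^a := 0). *)
Definition Cpow_pr (w a : C) : C :=
  if Req_EM_T (Cmod w) 0 then 0%C else Cexp (a * CLog w)%C.

Definition phiCe (Cc eps : R) (z : C) : C :=
  (z + RtoC Cc * Cpow_pr (1 + z) (RtoC eps))%C.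

Definition U_region (Cc eps : R) (z : C) : Prop :=
  exists w : C, 0 < Re w /\ z = phiCe Cc eps w.

From Stdlib Require Import Reals Lra Lia FunctionalExtensionality ClassicalEpsilon.
From Coquelicot Require Import Coquelicot.
Open Scope R_scope.

(* If [phi] is holomorphic and bounded by [M] on the closed square of half-side [s] centred
   at [z], then [|phi'(z)| <= 4 M / s]: integrate [(phi w - phi z) / (w - z)^2] along the
   boundary and shrink the square by Goursat's theorem; near [z] the integrand is
   [phi'(z) / (w - z)] up to an arbitrarily small error, and the integral of [1 / (w - z)]
   has modulus at least [4].
   It therefore suffices that every point [z] of [U_D^eps'] of large modulus is the centre
   of such a square inside [U_C^eps], with [s] independent of [z]: on the square [phi] is
   bounded, or [o(e^(-r Re w))] with [Re w] within [s] of [Re z].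
   If [eps < eps'], unit squares fit: [Re phi_D^eps'(w)] grows like [|w|^eps'], while
   [U_C^eps] contains every [a + i b] with [a > C (1 + b^2)^(eps/2)].
   If [eps' = eps] and [C < D], write [z = phi_D^eps(w)]. For [a + i b] near [z], the
   level curve [Im phi_C^eps = b] crosses the vertical line through [w] at a point whose
   image lies to the left of [a], by a margin proportional to [D - C]; following the level
   curve to the right then reaches [a + i b]. *)

(** * Contour integrals over rectangles *)

Definition CInt (g : R -> C) (a b : R) : C :=
  (RInt (fun t => fst (g t)) a b, RInt (fun t => snd (g t)) a b).

Definition continuous_on_seg (g : R -> C) (a b : R) :=
  forall t, a <= t <= b -> @continuous R_UniformSpace C_UniformSpace g t.

Lemma ex_RInt_fst_seg g a b : a <= b -> continuous_on_seg g a b ->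
  ex_RInt (fun t => fst (g t)) a b.
Proof.
  intros Hab H. apply (ex_RInt_continuous (V:=R_CompleteNormedModule)). intros z Hz.
  rewrite Rmin_left in Hz by lra; rewrite Rmax_right in Hz by lra.
  apply (continuous_comp g fst); [apply H; auto|].
  destruct (g z); apply continuous_fst.
Qed.

Lemma ex_RInt_snd_seg g a b : a <= b -> continuous_on_seg g a b ->
  ex_RInt (fun t => snd (g t)) a b.
Proof.
  intros Hab H. apply (ex_RInt_continuous (V:=R_CompleteNormedModule)). intros z Hz.
  rewrite Rmin_left in Hz by lra; rewrite Rmax_right in Hz by lra.
  apply (continuous_comp g snd); [apply H; auto|].
  destruct (g z); apply continuous_snd.
Qed.

Lemma norm_C_R (z : C) : @norm R_AbsRing C_R_NormedModule z = Cmod z.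
Proof.
  destruct z as [x y]. unfold Cmod.
  change (@norm R_AbsRing C_R_NormedModule (x, y))
    with (@norm R_AbsRing (prod_NormedModule R_AbsRing R_NormedModule R_NormedModule) (x, y)).
  unfold norm at 1. simpl. unfold prod_norm. simpl.
  change (sqrt (Rabs x ^ 2 + Rabs y ^ 2) = sqrt (x ^ 2 + y ^ 2)).
  rewrite !pow2_abs. reflexivity.
Qed.

Lemma is_RInt_CInt g a b : a <= b -> continuous_on_seg g a b ->
  @is_RInt C_R_NormedModule g a b (CInt g a b).
Proof.
  intros Hab H. unfold CInt.
  apply (is_RInt_fct_extend_pair (U:=R_NormedModule) (V:=R_NormedModule)).
  - apply (RInt_correct (V:=R_CompleteNormedModule)). apply ex_RInt_fst_seg; auto.
  - apply (RInt_correct (V:=R_CompleteNormedModule)). apply ex_RInt_snd_seg; auto.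
Qed.

Lemma Cmod_CInt_le g a b M : a <= b -> continuous_on_seg g a b ->
  (forall t, a <= t <= b -> Cmod (g t) <= M) -> Cmod (CInt g a b) <= (b - a) * M.
Proof.
  intros Hab H HM. rewrite <- norm_C_R.
  apply (norm_RInt_le_const (V:=C_R_NormedModule) g a b); auto.
  - intros. rewrite norm_C_R. auto.
  - apply is_RInt_CInt; auto.
Qed.

Lemma CInt_plus g h a b : a <= b -> continuous_on_seg g a b -> continuous_on_seg h a b ->
  CInt (fun t => g t + h t)%C a b = (CInt g a b + CInt h a b)%C.
Proof.
  intros Hab Hg Hh. unfold CInt, Cplus; simpl. f_equal.
  - apply (RInt_plus (V:=R_CompleteNormedModule)); apply ex_RInt_fst_seg; auto.
  - apply (RInt_plus (V:=R_CompleteNormedModule)); apply ex_RInt_snd_seg; auto.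
Qed.

Lemma CInt_Cmult (k : C) g a b : a <= b -> continuous_on_seg g a b ->
  CInt (fun t => k * g t)%C a b = (k * CInt g a b)%C.
Proof.
  intros Hab Hg. unfold CInt, Cmult; simpl.
  pose proof (ex_RInt_fst_seg _ _ _ Hab Hg) as Hf. pose proof (ex_RInt_snd_seg _ _ _ Hab Hg) as Hs.
  assert (Hk : forall (c : R) u, ex_RInt u a b -> ex_RInt (fun t => c * u t) a b)
    by (intros; apply (ex_RInt_scal (V:=R_NormedModule)); auto).
  f_equal.
  - rewrite (RInt_minus (V:=R_CompleteNormedModule)) by auto.
    rewrite !(RInt_scal (V:=R_CompleteNormedModule)) by auto. reflexivity.
  - rewrite (RInt_plus (V:=R_CompleteNormedModule)) by auto.
    rewrite !(RInt_scal (V:=R_CompleteNormedModule)) by auto. reflexivity.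
Qed.

Lemma CInt_Chasles g a m b : a <= m <= b -> continuous_on_seg g a b ->
  CInt g a b = (CInt g a m + CInt g m b)%C.
Proof.
  intros Hm H.
  assert (H1 : continuous_on_seg g a m) by (intros t Ht; apply H; lra).
  assert (H2 : continuous_on_seg g m b) by (intros t Ht; apply H; lra).
  unfold CInt, Cplus; simpl. f_equal; symmetry.
  - apply (RInt_Chasles (V:=R_CompleteNormedModule)); apply ex_RInt_fst_seg; lra || auto.
  - apply (RInt_Chasles (V:=R_CompleteNormedModule)); apply ex_RInt_snd_seg; lra || auto.
Qed.

Lemma continuous_horizontal (f : C -> C) x y :
  @continuous C_UniformSpace C_UniformSpace f (x, y) ->
  @continuous R_UniformSpace C_UniformSpace (fun t => f (t, y)) x.
Proof.
  intros H.
  apply (continuous_comp_2 (U:=R_UniformSpace) (V:=R_UniformSpace) (W:=R_UniformSpace)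
     (X:=C_UniformSpace) (fun t => t) (fun _ => y) (fun a b => f (a, b))).
  - apply continuous_id.
  - apply continuous_const.
  - eapply continuous_ext; [|exact H]. intros [u v]; reflexivity.
Qed.

Lemma continuous_vertical (f : C -> C) x y :
  @continuous C_UniformSpace C_UniformSpace f (x, y) ->
  @continuous R_UniformSpace C_UniformSpace (fun t => f (x, t)) y.
Proof.
  intros H.
  apply (continuous_comp_2 (U:=R_UniformSpace) (V:=R_UniformSpace) (W:=R_UniformSpace)
     (X:=C_UniformSpace) (fun _ => x) (fun t => t) (fun a b => f (a, b))).
  - apply continuous_const.
  - apply continuous_id.
  - eapply continuous_ext; [|exact H]. intros [u v]; reflexivity.
Qed.

Definition rect_int (f : C -> C) (a b c d : R) : C :=
  (CInt (fun x => f (x, c)) a b + Ci * CInt (fun y => f (b, y)) c d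
   - CInt (fun x => f (x, d)) a b - Ci * CInt (fun y => f (a, y)) c d)%C.

Definition continuous_on_rect_boundary (f : C -> C) a b c d :=
  continuous_on_seg (fun x => f (x, c)) a b /\ continuous_on_seg (fun x => f (x, d)) a b /\
  continuous_on_seg (fun y => f (a, y)) c d /\ continuous_on_seg (fun y => f (b, y)) c d.

Definition continuous_on_rect (f : C -> C) a b c d :=
  forall x y, a <= x <= b -> c <= y <= d ->
  @continuous C_UniformSpace C_UniformSpace f (x, y).

Lemma continuous_on_rect_boundary_of_rect f a b c d : a <= b -> c <= d ->
  continuous_on_rect f a b c d -> continuous_on_rect_boundary f a b c d.
Proof.
  intros Hab Hcd H. repeat split; intros t Ht.
  1,2: apply continuous_horizontal, H; lra.
  1,2: apply continuous_vertical, H; lra.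
Qed.

Lemma continuous_on_seg_plus g h a b : continuous_on_seg g a b -> continuous_on_seg h a b ->
  continuous_on_seg (fun t => g t + h t)%C a b.
Proof.
  intros Hg Hh t Ht.
  apply (continuous_plus (V:=C_R_NormedModule) g h); [apply Hg|apply Hh]; auto.
Qed.

Lemma continuous_on_seg_Cmult (k : C) g a b : continuous_on_seg g a b ->
  continuous_on_seg (fun t => k * g t)%C a b.
Proof.
  intros Hg t Ht.
  apply (continuous_scal_r (K:=C_AbsRing) (V:=C_NormedModule) k g). apply Hg; auto.
Qed.

Lemma continuous_on_rect_boundary_plus f g a b c d :
  continuous_on_rect_boundary f a b c d -> continuous_on_rect_boundary g a b c d ->
  continuous_on_rect_boundary (fun w => f w + g w)%C a b c d.
Proof.
  intros (F1&F2&F3&F4) (G1&G2&G3&G4). repeat split; apply continuous_on_seg_plus; auto.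
Qed.

Lemma continuous_on_rect_boundary_Cmult k f a b c d :
  continuous_on_rect_boundary f a b c d ->
  continuous_on_rect_boundary (fun w => k * f w)%C a b c d.
Proof.
  intros (F1&F2&F3&F4).
  repeat split; apply (continuous_on_seg_Cmult k (fun t => f _)); auto.
Qed.

Lemma rect_int_plus f g a b c d : a <= b -> c <= d ->
  continuous_on_rect_boundary f a b c d -> continuous_on_rect_boundary g a b c d ->
  rect_int (fun w => f w + g w)%C a b c d = (rect_int f a b c d + rect_int g a b c d)%C.
Proof.
  intros Hab Hcd (F1&F2&F3&F4) (G1&G2&G3&G4). unfold rect_int.
  rewrite !(CInt_plus (fun x => f (x, _)) (fun x => g (x, _))) by auto.
  rewrite !(CInt_plus (fun y => f (_, y)) (fun y => g (_, y))) by auto.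
  ring.
Qed.

Lemma rect_int_Cmult (k : C) f a b c d : a <= b -> c <= d ->
  continuous_on_rect_boundary f a b c d ->
  rect_int (fun w => k * f w)%C a b c d = (k * rect_int f a b c d)%C.
Proof.
  intros Hab Hcd (F1&F2&F3&F4). unfold rect_int.
  rewrite !(CInt_Cmult k (fun x => f (x, _))) by auto.
  rewrite !(CInt_Cmult k (fun y => f (_, y))) by auto.
  ring.
Qed.

Lemma rect_int_minus f g a b c d : a <= b -> c <= d ->
  continuous_on_rect_boundary f a b c d -> continuous_on_rect_boundary g a b c d ->
  rect_int (fun w => f w - g w)%C a b c d = (rect_int f a b c d - rect_int g a b c d)%C.
Proof.
  intros Hab Hcd Hf Hg.
  replace (fun w => f w - g w)%C with (fun w => f w + (-1) * g w)%C
    by (apply functional_extensionality; intros; ring).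
  rewrite rect_int_plus, rect_int_Cmult; auto.
  - ring.
  - apply continuous_on_rect_boundary_Cmult; auto.
Qed.

Lemma Cmod_rect_int_le f a b c d M : a <= b -> c <= d ->
  continuous_on_rect_boundary f a b c d ->
  (forall x, a <= x <= b -> Cmod (f (x, c)) <= M /\ Cmod (f (x, d)) <= M) ->
  (forall y, c <= y <= d -> Cmod (f (a, y)) <= M /\ Cmod (f (b, y)) <= M) ->
  Cmod (rect_int f a b c d) <= 2 * ((b - a) + (d - c)) * M.
Proof.
  intros Hab Hcd (F1&F2&F3&F4) Hx Hy. unfold rect_int.
  assert (E1 := Cmod_CInt_le _ a b M Hab F1 (fun t Ht => proj1 (Hx t Ht))).
  assert (E2 := Cmod_CInt_le _ a b M Hab F2 (fun t Ht => proj2 (Hx t Ht))).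
  assert (E3 := Cmod_CInt_le _ c d M Hcd F3 (fun t Ht => proj1 (Hy t Ht))).
  assert (E4 := Cmod_CInt_le _ c d M Hcd F4 (fun t Ht => proj2 (Hy t Ht))).
  assert (Ci1 : Cmod Ci = 1).
  { unfold Cmod, Ci; simpl. replace (0 * (0 * 1) + 1 * (1 * 1)) with 1 by ring. apply sqrt_1. }
  unfold Cminus.
  eapply Rle_trans; [apply Cmod_triangle|]. rewrite Cmod_opp, Cmod_mult, Ci1.
  eapply Rle_trans; [apply Rplus_le_compat_r; apply Cmod_triangle|]. rewrite Cmod_opp.
  eapply Rle_trans; [apply Rplus_le_compat_r; apply Rplus_le_compat_r; apply Cmod_triangle|].
  rewrite Cmod_mult, Ci1. lra.
Qed.

Lemma rect_int_split_x f a m b c d : a <= m <= b ->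
  continuous_on_seg (fun x => f (x, c)) a b -> continuous_on_seg (fun x => f (x, d)) a b ->
  rect_int f a b c d = (rect_int f a m c d + rect_int f m b c d)%C.
Proof.
  intros Hm H1 H2. unfold rect_int.
  rewrite (CInt_Chasles (fun x => f (x, c)) a m b), (CInt_Chasles (fun x => f (x, d)) a m b)
    by auto.
  ring.
Qed.

Lemma rect_int_split_y f a b c m d : c <= m <= d ->
  continuous_on_seg (fun y => f (a, y)) c d -> continuous_on_seg (fun y => f (b, y)) c d ->
  rect_int f a b c d = (rect_int f a b c m + rect_int f a b m d)%C.
Proof.
  intros Hm H1 H2. unfold rect_int.
  rewrite (CInt_Chasles (fun y => f (a, y)) c m d), (CInt_Chasles (fun y => f (b, y)) c m d)
    by auto.
  ring.
Qed.

Lemma rect_int_quadrisect f a b c d : a <= b -> c <= d -> continuous_on_rect f a b c d ->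
  let m := (a + b) / 2 in let n := (c + d) / 2 in
  rect_int f a b c d =
    (rect_int f a m c n + rect_int f m b c n + rect_int f a m n d + rect_int f m b n d)%C.
Proof.
  intros Hab Hcd H m n. unfold m, n.
  rewrite (rect_int_split_x f a ((a + b) / 2) b c d).
  2: lra.
  2,3: intros t Ht; apply continuous_horizontal, H; lra.
  rewrite (rect_int_split_y f a ((a + b) / 2) c ((c + d) / 2) d).
  2: lra.
  2,3: intros t Ht; apply continuous_vertical, H; lra.
  rewrite (rect_int_split_y f ((a + b) / 2) b c ((c + d) / 2) d).
  2: lra.
  2,3: intros t Ht; apply continuous_vertical, H; lra.
  ring.
Qed.

Lemma RInt_affine (F : R -> R) (p q a b : R) : (forall t, F t = p + q * t) ->
  RInt F a b = p * (b - a) + q * (b ^ 2 - a ^ 2) / 2.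
Proof.
  intros HF. apply is_RInt_unique.
  replace (p * (b - a) + q * (b ^ 2 - a ^ 2) / 2) with
    ((p * b + q * b ^ 2 / 2) - (p * a + q * a ^ 2 / 2)) by field.
  apply (is_RInt_derive (V:=R_CompleteNormedModule) (fun t => p * t + q * t ^ 2 / 2)).
  - intros x _. auto_derive; auto. rewrite HF. simpl; field.
  - intros x _. eapply continuous_ext; [intros t; symmetry; apply HF|].
    apply (continuous_plus (V:=R_NormedModule)); [apply continuous_const|].
    apply (continuous_mult (K:=R_AbsRing)); [apply continuous_const|apply continuous_id].
Qed.

Lemma rect_int_affine (al be : C) a b c d : rect_int (fun w => al + be * w)%C a b c d = 0%C.
Proof.
  unfold rect_int, CInt. simpl.
  rewrite (RInt_affine _ (fst al - snd be * c) (fst be)) by (intros; ring).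
  rewrite (RInt_affine _ (snd al + fst be * c) (snd be)) by (intros; ring).
  rewrite (RInt_affine _ (fst al + fst be * b) (- snd be)) by (intros; ring).
  rewrite (RInt_affine _ (snd al + snd be * b) (fst be)) by (intros; ring).
  rewrite (RInt_affine _ (fst al - snd be * d) (fst be)) by (intros; ring).
  rewrite (RInt_affine _ (snd al + fst be * d) (snd be)) by (intros; ring).
  rewrite (RInt_affine _ (fst al + fst be * a) (- snd be)) by (intros; ring).
  rewrite (RInt_affine _ (snd al + snd be * a) (fst be)) by (intros; ring).
  unfold Ci, Cplus, Cminus, Cmult, Copp; simpl.
  apply injective_projections; simpl; field.
Qed.

(** * Goursat's theorem and a Cauchy estimate *)

Definition is_Cderive (f : C -> C) (z l : C) := @is_derive C_AbsRing C_NormedModule f z l.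

Lemma is_Cderive_approx f z l : is_Cderive f z l -> forall eps, 0 < eps -> exists del, 0 < del /\
  forall w, Cmod (w - z) < del -> Cmod (f w - f z - l * (w - z)) <= eps * Cmod (w - z).
Proof.
  intros [_ H] eps Heps.
  destruct (H z (fun P HP => HP) (mkposreal eps Heps)) as [del Hd].
  exists del. split; [apply cond_pos|].
  intros w Hw. replace (l * (w - z))%C with ((w - z) * l)%C by ring. exact (Hd w Hw).
Qed.

Lemma is_Cderive_of_approx f z l : (forall eps, 0 < eps -> exists del, 0 < del /\
  forall w, Cmod (w - z) < del -> Cmod (f w - f z - l * (w - z)) <= eps * Cmod (w - z)) ->
  is_Cderive f z l.
Proof.
  intros H. split; [apply is_linear_scal_l|].
  intros z' Hz'.
  apply (is_filter_lim_locally_unique (K:=C_AbsRing) (V:=AbsRing_NormedModule C_AbsRing)) in Hz'.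
  subst z'. intros [eps Heps]. destruct (H eps Heps) as [del [Hd H2]].
  assert (Hd2 : 0 < del / 2) by lra.
  exists (mkposreal _ Hd2). intros w Hw. simpl in Hw.
  assert (Hw' : Cmod (minus w z) < del) by (change (Cmod (minus w z) < del / 2) in Hw; lra).
  specialize (H2 w Hw'). simpl.
  replace (l * (w - z))%C with ((w - z) * l)%C in H2 by ring. exact H2.
Qed.

Lemma is_Cderive_continuous f z l : is_Cderive f z l ->
  @continuous C_UniformSpace C_UniformSpace f z.
Proof.
  intros H. destruct (is_Cderive_approx f z l H 1 Rlt_0_1) as [d0 [Hd0 Hd]].
  intros P [eps HP].
  set (K := Cmod l + 1).
  assert (HK : 0 < K) by (unfold K; pose proof (Cmod_ge_0 l); lra).
  set (del := Rmin d0 (eps / K) / 2).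
  assert (Hm : 0 < Rmin d0 (eps / K))
    by (apply Rmin_case; [lra|apply Rdiv_lt_0_compat; [apply cond_pos|auto]]).
  assert (Hdel : 0 < del) by (unfold del; lra).
  exists (mkposreal del Hdel). intros w Hw. apply HP.
  apply C_NormedModule_mixin_compat2 in Hw. simpl in Hw.
  change (minus w z) with (w - z)%C in Hw.
  (* the product-metric ball of radius [del] lies in the disc of radius [sqrt 2 * del] *)
  assert (Hsqrt2 : sqrt 2 < 2)
    by (rewrite <- (sqrt_square 2) at 2 by lra; apply sqrt_lt_1; lra).
  assert (Hwz : Cmod (w - z) < Rmin d0 (eps / K))
    by (pose proof (Cmod_ge_0 (w - z)); unfold del in Hw; nra).
  apply C_NormedModule_mixin_compat1. change (minus (f w) (f z)) with (f w - f z)%C.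
  assert (Hw1 : Cmod (w - z) < d0) by (eapply Rlt_le_trans; [exact Hwz|apply Rmin_l]).
  assert (Hw2 : Cmod (w - z) < eps / K) by (eapply Rlt_le_trans; [exact Hwz|apply Rmin_r]).
  specialize (Hd w Hw1).
  replace (f w - f z)%C with ((f w - f z - l * (w - z)) + l * (w - z))%C by ring.
  eapply Rle_lt_trans; [apply Cmod_triangle|]. rewrite Cmod_mult.
  apply Rmult_lt_compat_r with (r := K) in Hw2; auto.
  unfold Rdiv in Hw2. rewrite Rmult_assoc, Rinv_l, Rmult_1_r in Hw2 by lra.
  unfold K in Hw2. lra.
Qed.

Lemma Cmod_le_Rabs_sum (z : C) : Cmod z <= Rabs (fst z) + Rabs (snd z).
Proof.
  destruct z as [x y]. unfold Cmod; simpl.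
  pose proof (Rabs_pos x); pose proof (Rabs_pos y).
  rewrite <- (sqrt_square (Rabs x + Rabs y)) by lra.
  apply sqrt_le_1_alt.
  replace (x * (x * 1) + y * (y * 1)) with (Rabs x * Rabs x + Rabs y * Rabs y).
  - nra.
  - rewrite <- !Rabs_mult, !Rabs_right; try ring; nra.
Qed.

Lemma is_Cderive_affine al be w : is_Cderive (fun w => al + be * w)%C w be.
Proof.
  apply is_Cderive_of_approx. intros eps Heps. exists 1. split; [lra|]. intros y _.
  replace (al + be * y - (al + be * w) - be * (y - w))%C with (RtoC 0) by ring.
  rewrite Cmod_0. pose proof (Cmod_ge_0 (y - w)). nra.
Qed.

Lemma continuous_on_rect_of_derivable f a b c d :
  (forall x y, a <= x <= b -> c <= y <= d -> exists l, is_Cderive f (x, y) l) ->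
  continuous_on_rect f a b c d.
Proof.
  intros H x y Hx Hy. destruct (H x y Hx Hy) as [l Hl]. eapply is_Cderive_continuous; eauto.
Qed.

Lemma Cmod_rect_int_le_linearization f p l eps del a b c d :
  a <= b -> c <= d -> 0 <= eps -> continuous_on_rect f a b c d ->
  (forall w, Cmod (w - p) < del -> Cmod (f w - f p - l * (w - p)) <= eps * Cmod (w - p)) ->
  a <= fst p <= b -> c <= snd p <= d -> (b - a) + (d - c) < del ->
  Cmod (rect_int f a b c d) <= 2 * eps * ((b - a) + (d - c)) ^ 2.
Proof.
  intros Hab Hcd Heps Hf Hlin Hpx Hpy Hdel.
  set (S := (b - a) + (d - c)).
  set (aff := fun w => (f p - l * p + l * w)%C).
  assert (Hbound : forall x y, a <= x <= b -> c <= y <= d -> Cmod (f (x, y) - aff (x, y)) <= eps * S).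
  { intros x y Hx Hy.
    assert (Hw : Cmod ((x, y) - p) <= S).
    { eapply Rle_trans; [apply Cmod_le_Rabs_sum|]. destruct p as [px py]; simpl in *.
      unfold S; apply Rplus_le_compat; apply Rabs_le; lra. }
    replace (f (x, y) - aff (x, y))%C with (f (x, y) - f p - l * ((x, y) - p))%C
      by (unfold aff; ring).
    eapply Rle_trans; [apply Hlin; unfold S in Hw; lra|]. apply Rmult_le_compat_l; lra. }
  assert (Haff : continuous_on_rect aff a b c d)
    by (intros x y _ _; eapply is_Cderive_continuous; apply is_Cderive_affine).
  assert (Hdiff : continuous_on_rect (fun w => f w - aff w)%C a b c d).
  { intros x y Hx Hy. apply (continuous_minus (V:=C_NormedModule)); [apply Hf|apply Haff]; auto. }
  replace (rect_int f a b c d) with (rect_int (fun w => f w - aff w)%C a b c d).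
  - eapply Rle_trans.
    + apply Cmod_rect_int_le; auto using continuous_on_rect_boundary_of_rect.
      * intros x Hx. split; apply Hbound; lra.
      * intros y Hy. split; apply Hbound; lra.
    + right. fold S. ring.
  - rewrite rect_int_minus; auto using continuous_on_rect_boundary_of_rect.
    unfold aff. rewrite rect_int_affine. ring.
Qed.

Record rect := mk_rect { ra : R; rb : R; rc : R; rd : R }.

Definition rect_int_of f r := rect_int f (ra r) (rb r) (rc r) (rd r).

Definition quadrisect f r :=
  let m := (ra r + rb r) / 2 in let n := (rc r + rd r) / 2 in
  let big q := Rle_dec (Cmod (rect_int_of f r) / 4) (Cmod (rect_int_of f q)) in
  if big (mk_rect (ra r) m (rc r) n) then mk_rect (ra r) m (rc r) n else
  if big (mk_rect m (rb r) (rc r) n) then mk_rect m (rb r) (rc r) n else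
  if big (mk_rect (ra r) m n (rd r)) then mk_rect (ra r) m n (rd r) else
  mk_rect m (rb r) n (rd r).

Fixpoint quadrisect_seq f r n := match n with
  | O => r
  | S k => quadrisect f (quadrisect_seq f r k)
  end.

Lemma quadrisect_geom f r : ra r <= rb r -> rc r <= rd r ->
  let q := quadrisect f r in
  ra r <= ra q /\ rb q <= rb r /\ rc r <= rc q /\ rd q <= rd r /\
  rb q - ra q = (rb r - ra r) / 2 /\ rd q - rc q = (rd r - rc r) / 2.
Proof. intros H1 H2 q; unfold q, quadrisect; repeat destruct Rle_dec; simpl; lra. Qed.

Lemma quadrisect_rect_int f r : ra r <= rb r -> rc r <= rd r ->
  continuous_on_rect f (ra r) (rb r) (rc r) (rd r) ->
  Cmod (rect_int_of f r) / 4 <= Cmod (rect_int_of f (quadrisect f r)).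
Proof.
  intros H1 H2 H3. pose proof (rect_int_quadrisect f _ _ _ _ H1 H2 H3) as Q. simpl in Q.
  unfold quadrisect. repeat destruct Rle_dec as [?|?]; auto.
  unfold rect_int_of in *; simpl in *.
  set (xm := (ra r + rb r) / 2) in *. set (ym := (rc r + rd r) / 2) in *.
  set (q1 := rect_int f (ra r) xm (rc r) ym) in *.
  set (q2 := rect_int f xm (rb r) (rc r) ym) in *.
  set (q3 := rect_int f (ra r) xm ym (rd r)) in *.
  set (q4 := rect_int f xm (rb r) ym (rd r)) in *.
  rewrite Q in *.
  pose proof (Cmod_triangle (q1 + q2 + q3) q4).
  pose proof (Cmod_triangle (q1 + q2) q3).
  pose proof (Cmod_triangle q1 q2).
  lra.
Qed.

Section Quadrisection.

Variables (f : C -> C) (r0 : rect).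
Hypotheses (Hab : ra r0 <= rb r0) (Hcd : rc r0 <= rd r0).

Local Notation r := (quadrisect_seq f r0).

Lemma quadrisect_seq_size n :
  rb (r n) - ra (r n) = (rb r0 - ra r0) / 2 ^ n /\ rd (r n) - rc (r n) = (rd r0 - rc r0) / 2 ^ n.
Proof.
  induction n as [|n [IH1 IH2]]; simpl; [split; field|].
  assert (P : 0 < 2 ^ n) by (apply pow_lt; lra).
  assert (0 <= (rb r0 - ra r0) / 2 ^ n) by (apply Rdiv_le_0_compat; lra).
  assert (0 <= (rd r0 - rc r0) / 2 ^ n) by (apply Rdiv_le_0_compat; lra).
  destruct (quadrisect_geom f (r n)) as (_&_&_&_&G5&G6); [lra|lra|].
  rewrite G5, G6, IH1, IH2. split; field; lra.
Qed.

Lemma quadrisect_seq_nondegenerate n : ra (r n) <= rb (r n) /\ rc (r n) <= rd (r n).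
Proof.
  destruct (quadrisect_seq_size n) as [E1 E2].
  assert (P : 0 < 2 ^ n) by (apply pow_lt; lra).
  assert (0 <= (rb r0 - ra r0) / 2 ^ n) by (apply Rdiv_le_0_compat; lra).
  assert (0 <= (rd r0 - rc r0) / 2 ^ n) by (apply Rdiv_le_0_compat; lra).
  lra.
Qed.

Lemma quadrisect_seq_step n :
  ra (r n) <= ra (r (S n)) /\ rb (r (S n)) <= rb (r n) /\
  rc (r n) <= rc (r (S n)) /\ rd (r (S n)) <= rd (r n).
Proof.
  destruct (quadrisect_seq_nondegenerate n).
  destruct (quadrisect_geom f (r n)) as (G1&G2&G3&G4&_&_); auto.
Qed.

Lemma quadrisect_seq_sub n :
  ra r0 <= ra (r n) /\ rb (r n) <= rb r0 /\ rc r0 <= rc (r n) /\ rd (r n) <= rd r0.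
Proof.
  induction n as [|n IH]; [simpl; lra|].
  pose proof (quadrisect_seq_step n). lra.
Qed.

Lemma quadrisect_seq_rect_int n : continuous_on_rect f (ra r0) (rb r0) (rc r0) (rd r0) ->
  Cmod (rect_int_of f r0) / 4 ^ n <= Cmod (rect_int_of f (r n)).
Proof.
  intros Hf. induction n as [|n IH]; [simpl; lra|].
  destruct (quadrisect_seq_nondegenerate n). pose proof (quadrisect_seq_sub n).
  eapply Rle_trans; [|apply (quadrisect_rect_int f (r n)); auto].
  - assert (P4 : 0 < 4 ^ n) by (apply pow_lt; lra).
    simpl. replace (Cmod (rect_int_of f r0) / (4 * 4 ^ n))
      with (Cmod (rect_int_of f r0) / 4 ^ n / 4) by (field; lra).
    lra.
  - intros x y Hx Hy. apply Hf; lra.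
Qed.

End Quadrisection.

Lemma nested_intervals_point (A B : nat -> R) :
  (forall n, A n <= A (S n)) -> (forall n, B (S n) <= B n) -> (forall n, A n <= B n) ->
  exists p, forall n, A n <= p <= B n.
Proof.
  intros HA HB HAB.
  assert (HAm : forall m k, (m <= k)%nat -> A m <= A k)
    by (intros m k Hmk; apply Rge_le, growing_prop; [exact HA|lia]).
  assert (HBm : forall m k, (m <= k)%nat -> B k <= B m)
    by (intros m k Hmk; apply decreasing_prop; [exact HB|lia]).
  assert (Hall : forall m n, A m <= B n).
  { intros m n. apply Rle_trans with (A (Nat.max m n)); [apply HAm; lia|].
    apply Rle_trans with (B (Nat.max m n)); [apply HAB|apply HBm; lia]. }
  destruct (completeness (fun x => exists n, x = A n)) as [p [Hp1 Hp2]].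
  - exists (B 0%nat). intros x [n ->]. auto.
  - exists (A 0%nat); eauto.
  - exists p. intros n. split.
    + apply Hp1. eauto.
    + apply Hp2. intros x [m ->]. auto.
Qed.

Lemma quadrisect_seq_point f r0 : ra r0 <= rb r0 -> rc r0 <= rd r0 ->
  exists p, forall n, ra (quadrisect_seq f r0 n) <= fst p <= rb (quadrisect_seq f r0 n) /\
                      rc (quadrisect_seq f r0 n) <= snd p <= rd (quadrisect_seq f r0 n).
Proof.
  intros Hab Hcd.
  pose proof (quadrisect_seq_step f r0 Hab Hcd) as St.
  pose proof (quadrisect_seq_nondegenerate f r0 Hab Hcd) as Nd.
  destruct (nested_intervals_point (fun n => ra (quadrisect_seq f r0 n))
              (fun n => rb (quadrisect_seq f r0 n))) as [px Hpx];
    [apply St|apply St|apply Nd|].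
  destruct (nested_intervals_point (fun n => rc (quadrisect_seq f r0 n))
              (fun n => rd (quadrisect_seq f r0 n))) as [py Hpy];
    [apply St|apply St|apply Nd|].
  exists (px, py). auto.
Qed.

Lemma pow2_inv_lt (S del : R) : 0 <= S -> 0 < del -> exists n : nat, S / 2 ^ n < del.
Proof.
  intros HS Hd.
  destruct (pow_lt_1_zero (/ 2)) with (y := del / (S + 1)) as [N HN].
  { rewrite Rabs_right; lra. }
  { apply Rdiv_lt_0_compat; lra. }
  exists N. specialize (HN N (le_n _)).
  rewrite Rabs_right, pow_inv in HN by (try apply Rle_ge, pow_le; lra).
  assert (P : 0 < / 2 ^ N) by (apply Rinv_0_lt_compat, pow_lt; lra).
  apply Rmult_lt_compat_l with (r := S + 1) in HN; [|lra].
  replace ((S + 1) * (del / (S + 1))) with del in HN by (field; lra).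
  unfold Rdiv. nra.
Qed.

(* Quadrisection shrinks to a point [p] where [f] is almost affine, and affine maps have
   zero boundary integral: the integral over the n-th rectangle is at most [o(4^-n)]
   although it is at least [4^-n] times the original one. *)
Lemma Cmod_rect_int_le_eps f a b c d eps : a <= b -> c <= d -> 0 < eps ->
  (forall x y, a <= x <= b -> c <= y <= d -> exists l, is_Cderive f (x, y) l) ->
  Cmod (rect_int f a b c d) <= 2 * eps * ((b - a) + (d - c)) ^ 2.
Proof.
  intros Hab Hcd Heps Hder.
  pose proof (continuous_on_rect_of_derivable f a b c d Hder) as Hf.
  set (r0 := mk_rect a b c d).
  destruct (quadrisect_seq_point f r0 Hab Hcd) as [p Hp].
  destruct (Hp 0%nat) as [Hpx Hpy]. simpl in Hpx, Hpy.
  destruct (Hder (fst p) (snd p) Hpx Hpy) as [l Hl]. rewrite <- surjective_pairing in Hl.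
  set (S := (b - a) + (d - c)).
  destruct (is_Cderive_approx f p l Hl eps Heps) as [del [Hdel Hlin]].
  destruct (pow2_inv_lt S del) as [n Hn]; [unfold S; lra|auto|].
  set (rn := quadrisect_seq f r0 n).
  destruct (quadrisect_seq_size f r0 Hab Hcd n) as [W H]. fold rn in W, H. simpl in W, H.
  destruct (quadrisect_seq_sub f r0 Hab Hcd n) as (I1&I2&I3&I4). fold rn in I1, I2, I3, I4.
  simpl in I1, I2, I3, I4.
  destruct (quadrisect_seq_nondegenerate f r0 Hab Hcd n) as [N1 N2]. fold rn in N1, N2.
  destruct (Hp n) as [Px Py]. fold rn in Px, Py.
  assert (P2 : 0 < 2 ^ n) by (apply pow_lt; lra).
  assert (P4 : 4 ^ n = (2 ^ n) ^ 2)
    by (replace 4 with (2 * 2) by ring; rewrite Rpow_mult_distr; ring).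
  assert (Hsize : (rb rn - ra rn) + (rd rn - rc rn) = S / 2 ^ n)
    by (rewrite W, H; unfold S; field; lra).
  assert (Hsmall : Cmod (rect_int_of f rn) <= 2 * eps * S ^ 2 / 4 ^ n).
  { replace (2 * eps * S ^ 2 / 4 ^ n) with (2 * eps * (S / 2 ^ n) ^ 2)
      by (rewrite P4; field; lra).
    rewrite <- Hsize. apply (Cmod_rect_int_le_linearization f p l eps del); auto; try lra.
    intros x y Hx Hy. apply Hf; lra. }
  pose proof (quadrisect_seq_rect_int f r0 Hab Hcd n Hf) as Hlarge. fold rn in Hlarge.
  change (rect_int_of f r0) with (rect_int f a b c d) in Hlarge.
  assert (0 < 4 ^ n) by (apply pow_lt; lra).
  apply Rmult_le_reg_r with (/ 4 ^ n); [apply Rinv_0_lt_compat; lra|]. unfold Rdiv in *. lra.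
Qed.

Theorem goursat f a b c d : a <= b -> c <= d ->
  (forall x y, a <= x <= b -> c <= y <= d -> exists l, is_Cderive f (x, y) l) ->
  rect_int f a b c d = 0%C.
Proof.
  intros Hab Hcd Hder. apply Cmod_eq_0, Rle_antisym; [|apply Cmod_ge_0].
  apply le_epsilon. intros eps Heps. rewrite Rplus_0_l.
  set (S := (b - a) + (d - c)).
  assert (HS : 0 < 2 * S ^ 2 + 1) by (pose proof (pow2_ge_0 S); lra).
  eapply Rle_trans;
    [apply (Cmod_rect_int_le_eps f a b c d (eps / (2 * S ^ 2 + 1))); auto;
     apply Rdiv_lt_0_compat; lra|].
  fold S. apply Rmult_le_reg_r with (2 * S ^ 2 + 1); auto.
  replace (2 * (eps / (2 * S ^ 2 + 1)) * S ^ 2 * (2 * S ^ 2 + 1)) with (2 * S ^ 2 * eps)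
    by (field; lra).
  pose proof (pow2_ge_0 S). nra.
Qed.

Lemma is_Cderive_of_AbsRing f z l :
  @is_derive C_AbsRing (AbsRing_NormedModule C_AbsRing) f z l -> is_Cderive f z l.
Proof. intros [_ H]. split; [apply is_linear_scal_l|]. exact H. Qed.

Lemma is_Cderive_to_AbsRing f z l :
  is_Cderive f z l -> @is_derive C_AbsRing (AbsRing_NormedModule C_AbsRing) f z l.
Proof. intros [_ H]. split; [apply is_linear_scal_l|]. exact H. Qed.

Lemma is_Cderive_const (k : C) z : is_Cderive (fun _ => k) z 0%C.
Proof. exact (is_derive_const (K:=C_AbsRing) (V:=C_NormedModule) k z). Qed.

Lemma is_Cderive_id z : is_Cderive (fun w => w) z 1%C.
Proof. apply is_Cderive_of_AbsRing. exact (is_derive_id (K:=C_AbsRing) z). Qed.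

Lemma is_Cderive_minus f g z lf lg : is_Cderive f z lf -> is_Cderive g z lg ->
  is_Cderive (fun w => f w - g w)%C z (lf - lg)%C.
Proof. exact (is_derive_minus (K:=C_AbsRing) (V:=C_NormedModule) f g z lf lg). Qed.

Lemma is_Cderive_mult f g z lf lg : is_Cderive f z lf -> is_Cderive g z lg ->
  is_Cderive (fun w => f w * g w)%C z (lf * g z + f z * lg)%C.
Proof.
  intros Hf Hg. apply is_Cderive_of_AbsRing.
  apply (is_derive_mult (K:=C_AbsRing) f g z lf lg);
    [apply is_Cderive_to_AbsRing; auto|apply is_Cderive_to_AbsRing; auto|].
  intros; apply Cmult_comm.
Qed.

Lemma is_Cderive_comp f g z lf lg : is_Cderive f (g z) lf -> is_Cderive g z lg ->
  is_Cderive (fun w => f (g w)) z (lg * lf)%C.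
Proof.
  intros Hf Hg.
  exact (is_derive_comp (K:=C_AbsRing) (V:=C_NormedModule) f g z lf lg Hf
           (is_Cderive_to_AbsRing _ _ _ Hg)).
Qed.

Lemma is_Cderive_Cinv (u : C) : u <> 0%C -> is_Cderive Cinv u (- (/ u * / u))%C.
Proof.
  intros Hu. apply is_Cderive_of_approx. intros eps Heps.
  assert (Hm := proj1 (Cmod_gt_0 u) Hu). set (m := Cmod u) in *.
  assert (Hm3 : 0 < m ^ 3) by (apply pow_lt; auto).
  exists (Rmin (m / 2) (eps * m ^ 3 / 2)). split.
  { apply Rmin_case; [lra|]. apply Rdiv_lt_0_compat; [apply Rmult_lt_0_compat|]; lra. }
  intros y Hy.
  assert (Hy1 : Cmod (y - u) < m / 2) by (eapply Rlt_le_trans; [exact Hy|apply Rmin_l]).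
  assert (Hy2 : Cmod (y - u) < eps * m ^ 3 / 2) by (eapply Rlt_le_trans; [exact Hy|apply Rmin_r]).
  assert (Hym : m / 2 <= Cmod y).
  { pose proof (Cmod_triangle y (- (y - u))%C) as H. rewrite Cmod_opp in H.
    replace (y + - (y - u))%C with u in H by ring. unfold m in *. lra. }
  assert (Hy0 : y <> 0%C) by (intros E; rewrite E, Cmod_0 in Hym; lra).
  replace (/ y - / u - - (/ u * / u) * (y - u))%C with ((y - u) * (y - u) * / (y * u * u))%C
    by (field; split; auto).
  rewrite !Cmod_mult, Cmod_inv, !Cmod_mult by (repeat apply Cmult_neq_0; auto).
  fold m. set (t := Cmod (y - u)) in *. assert (0 <= t) by apply Cmod_ge_0.
  apply Rle_trans with (t * t * / (m / 2 * m * m)).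
  { apply Rmult_le_compat_l; [nra|]. apply Rinv_le_contravar.
    - apply Rmult_lt_0_compat; [apply Rmult_lt_0_compat|]; lra.
    - apply Rmult_le_compat_r; [lra|]. apply Rmult_le_compat_r; lra. }
  replace (t * t * / (m / 2 * m * m)) with ((2 * t / m ^ 3) * t) by (field; lra).
  apply Rmult_le_compat_r; auto.
  apply Rmult_le_reg_r with (m ^ 3); auto.
  replace (2 * t / m ^ 3 * m ^ 3) with (2 * t) by (field; lra). lra.
Qed.

Lemma pair_neq (x y x0 y0 : R) : x <> x0 \/ y <> y0 -> (x, y) <> (x0, y0).
Proof. intros [H|H] E; injection E; intros; auto. Qed.

Definition holomorphic_on_punctured_square (k : C -> C) (x0 y0 s : R) :=
  forall x y, Rabs (x - x0) <= s -> Rabs (y - y0) <= s -> (x, y) <> (x0, y0) ->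
  exists l, is_Cderive k (x, y) l.

Lemma holomorphic_on_punctured_square_continuous k x0 y0 s :
  holomorphic_on_punctured_square k x0 y0 s ->
  forall x y, Rabs (x - x0) <= s -> Rabs (y - y0) <= s -> x <> x0 \/ y <> y0 ->
  @continuous C_UniformSpace C_UniformSpace k (x, y).
Proof.
  intros Hk x y Hx Hy Hn. destruct (Hk x y Hx Hy (pair_neq _ _ _ _ Hn)) as [l Hl].
  eapply is_Cderive_continuous; eauto.
Qed.

Lemma continuous_on_square_boundary k x0 y0 s eta : 0 < eta <= s ->
  holomorphic_on_punctured_square k x0 y0 s ->
  continuous_on_rect_boundary k (x0 - eta) (x0 + eta) (y0 - eta) (y0 + eta).
Proof.
  intros He Hk.
  pose proof (holomorphic_on_punctured_square_continuous k x0 y0 s Hk) as Hc.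
  repeat split; intros t Ht.
  1,2: apply continuous_horizontal, Hc; try (apply Rabs_le; lra); right; lra.
  1,2: apply continuous_vertical, Hc; try (apply Rabs_le; lra); left; lra.
Qed.

(* By Goursat the integral vanishes on the eight rectangles surrounding the small square. *)
Lemma rect_int_punctured_square k x0 y0 s eta : 0 < eta < s ->
  holomorphic_on_punctured_square k x0 y0 s ->
  rect_int k (x0 - s) (x0 + s) (y0 - s) (y0 + s) =
  rect_int k (x0 - eta) (x0 + eta) (y0 - eta) (y0 + eta).
Proof.
  intros He Hk.
  pose proof (holomorphic_on_punctured_square_continuous k x0 y0 s Hk) as Hc.
  assert (Hg : forall a b c d, x0 - s <= a <= b -> b <= x0 + s -> y0 - s <= c <= d ->
            d <= y0 + s -> b < x0 \/ x0 < a \/ d < y0 \/ y0 < c -> rect_int k a b c d = 0%C).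
  { intros a b c d Ha Hb Hc' Hd' Hn. apply goursat; try lra.
    intros x y Hx Hy. apply Hk; try (apply Rabs_le; lra).
    apply pair_neq. destruct Hn as [H|[H|[H|H]]]; [left|left|right|right]; lra. }
  assert (Hh : forall yy a b, x0 - s <= a -> b <= x0 + s -> Rabs (yy - y0) <= s -> yy <> y0 ->
            continuous_on_seg (fun x => k (x, yy)) a b).
  { intros yy a b Ha Hb Hy Hn t Ht. apply continuous_horizontal, Hc; auto. apply Rabs_le; lra. }
  assert (Hv : forall xx c d, y0 - s <= c -> d <= y0 + s -> Rabs (xx - x0) <= s -> xx <> x0 ->
            continuous_on_seg (fun y => k (xx, y)) c d).
  { intros xx c d Hc' Hd' Hx Hn t Ht. apply continuous_vertical, Hc; auto. apply Rabs_le; lra. }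
  assert (Rabs (y0 - s - y0) <= s) by (apply Rabs_le; lra).
  assert (Rabs (y0 + s - y0) <= s) by (apply Rabs_le; lra).
  assert (Rabs (x0 - eta - x0) <= s) by (apply Rabs_le; lra).
  assert (Rabs (x0 + eta - x0) <= s) by (apply Rabs_le; lra).
  rewrite (rect_int_split_x k (x0 - s) (x0 - eta) (x0 + s));
    [|lra|apply Hh; lra|apply Hh; lra].
  rewrite (rect_int_split_x k (x0 - eta) (x0 + eta) (x0 + s));
    [|lra|apply Hh; lra|apply Hh; lra].
  rewrite (rect_int_split_y k (x0 - eta) (x0 + eta) (y0 - s) (y0 - eta) (y0 + s));
    [|lra|apply Hv; lra|apply Hv; lra].
  rewrite (rect_int_split_y k (x0 - eta) (x0 + eta) (y0 - eta) (y0 + eta) (y0 + s));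
    [|lra|apply Hv; lra|apply Hv; lra].
  rewrite (Hg (x0 - s) (x0 - eta) (y0 - s) (y0 + s)),
    (Hg (x0 + eta) (x0 + s) (y0 - s) (y0 + s)),
    (Hg (x0 - eta) (x0 + eta) (y0 - s) (y0 - eta)),
    (Hg (x0 - eta) (x0 + eta) (y0 + eta) (y0 + s)) by lra.
  ring.
Qed.

Lemma holomorphic_on_punctured_square_Cinv x0 y0 s :
  holomorphic_on_punctured_square (fun w => / (w - (x0, y0)))%C x0 y0 s.
Proof.
  intros x y _ _ Hn. eexists.
  apply (is_Cderive_comp Cinv (fun w => w - (x0, y0))%C).
  - apply is_Cderive_Cinv. intros E. apply Hn.
    unfold Cminus, Cplus, Copp in E; simpl in E. injection E; intros; f_equal; lra.
  - apply is_Cderive_minus; [apply is_Cderive_id|apply is_Cderive_const].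
Qed.

Lemma RInt_ge_const (F : R -> R) a b m : a <= b -> ex_RInt F a b ->
  (forall t, a < t < b -> m <= F t) -> m * (b - a) <= RInt F a b.
Proof.
  intros Hab HF Hm.
  replace (m * (b - a)) with (RInt (fun _ => m) a b).
  - apply RInt_le; auto. apply (ex_RInt_const (V:=R_NormedModule)).
  - rewrite (RInt_const (V:=R_CompleteNormedModule)). simpl.
    unfold scal; simpl. unfold mult; simpl. ring.
Qed.

Lemma RInt_Poisson_side_ge x0 eta (F : R -> R) : 0 < eta -> ex_RInt F (x0 - eta) (x0 + eta) ->
  (forall t, F t = eta / ((t - x0) * (t - x0) + eta * eta)) ->
  1 <= RInt F (x0 - eta) (x0 + eta).
Proof.
  intros He HF HFe.
  replace 1 with (1 / (2 * eta) * (x0 + eta - (x0 - eta))) by (field; lra).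
  apply RInt_ge_const; auto; [lra|]. intros t Ht. rewrite HFe.
  pose proof (Rle_0_sqr (t - x0)) as Hsq; unfold Rsqr in Hsq.
  assert (Hlt : (t - x0) * (t - x0) <= eta * eta).
  { assert (0 < (x0 + eta - t) * (t - (x0 - eta))) by (apply Rmult_lt_0_compat; lra). nra. }
  assert (Hpos : 0 < (t - x0) * (t - x0) + eta * eta) by nra.
  apply Rmult_le_reg_r with (2 * eta * ((t - x0) * (t - x0) + eta * eta));
    [apply Rmult_lt_0_compat; lra|].
  replace (1 / (2 * eta) * (2 * eta * ((t - x0) * (t - x0) + eta * eta)))
    with ((t - x0) * (t - x0) + eta * eta) by (field; lra).
  replace (eta / ((t - x0) * (t - x0) + eta * eta) * (2 * eta * ((t - x0) * (t - x0) + eta * eta)))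
    with (2 * eta * eta) by (field; lra).
  lra.
Qed.

(* The imaginary part of the integral is [2 pi]; each side contributes at least [1]. *)
Lemma rect_int_Cinv_ge x0 y0 eta : 0 < eta ->
  4 <= Cmod (rect_int (fun w => / (w - (x0, y0)))%C (x0 - eta) (x0 + eta) (y0 - eta) (y0 + eta)).
Proof.
  intros He.
  destruct (continuous_on_square_boundary _ x0 y0 eta eta (conj He (Rle_refl _))
              (holomorphic_on_punctured_square_Cinv x0 y0 eta)) as (B1&B2&B3&B4).
  assert (Hab : x0 - eta <= x0 + eta) by lra. assert (Hcd : y0 - eta <= y0 + eta) by lra.
  pose proof (ex_RInt_snd_seg _ _ _ Hab B1) as E1.
  pose proof (ex_RInt_snd_seg _ _ _ Hab B2) as E2.
  pose proof (ex_RInt_fst_seg _ _ _ Hcd B3) as E3.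
  pose proof (ex_RInt_fst_seg _ _ _ Hcd B4) as E4.
  assert (Hsq : forall u v, 0 < v -> u * (u * 1) + v * (v * 1) <> 0 /\ u * u + v * v <> 0)
    by (intros u v Hv; pose proof (Rle_0_sqr u); unfold Rsqr in *; split; nra).
  assert (F1 := RInt_Poisson_side_ge x0 eta _ He E1).
  assert (F2 := RInt_Poisson_side_ge y0 eta _ He E4).
  assert (F3 := RInt_Poisson_side_ge x0 eta _ He (ex_RInt_opp (V:=R_NormedModule) _ _ _ E2)).
  assert (F4 := RInt_Poisson_side_ge y0 eta _ He (ex_RInt_opp (V:=R_NormedModule) _ _ _ E3)).
  rewrite (RInt_opp (V:=R_CompleteNormedModule)) in F3, F4 by auto.
  eapply Rle_trans; [|apply Rmax_Cmod].
  eapply Rle_trans; [|apply Rmax_r]. eapply Rle_trans; [|apply Rle_abs].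
  unfold rect_int, CInt. simpl. simpl in F1, F2, F3, F4. unfold opp in F3, F4; simpl in F3, F4.
  lapply F1; [intros G1|]. lapply F2; [intros G2|]. lapply F3; [intros G3|]. lapply F4; [intros G4|].
  1: lra.
  all: intros t; field; repeat split;
    first [apply Hsq; lra | replace (x0 - eta + - x0) with (- eta) by ring; apply Hsq; lra].
Qed.

Definition derivative_kernel (f : C -> C) (z w : C) : C :=
  ((f w - f z) * / ((w - z) * (w - z)))%C.

Lemma Cmod_sub_neq_0 (w z : C) : w <> z -> 0 < Cmod (w - z).
Proof.
  intros H. apply Cmod_gt_0. intros E. apply H.
  replace w with ((w - z) + z)%C by ring. rewrite E. ring.
Qed.

Lemma Cmod_sub_ge_square_side x y x0 y0 s : Rabs (x - x0) = s \/ Rabs (y - y0) = s ->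
  s <= Cmod ((x, y) - (x0, y0)).
Proof.
  intros [H|H]; rewrite <- H; (eapply Rle_trans; [|apply Rmax_Cmod]); [apply Rmax_l|apply Rmax_r].
Qed.

Lemma Rabs_offset a d : 0 <= d -> Rabs (a - d - a) = d /\ Rabs (a + d - a) = d.
Proof.
  intros Hd. replace (a - d - a) with (- d) by ring. replace (a + d - a) with d by ring.
  rewrite Rabs_Ropp, Rabs_right; lra.
Qed.

Section CauchyEstimate.

Variables (f : C -> C) (x0 y0 s M : R).
Hypothesis Hs : 0 < s.
Hypothesis Hf : forall x y, Rabs (x - x0) <= s -> Rabs (y - y0) <= s ->
  exists l, is_Cderive f (x, y) l.
Hypothesis HM : forall x y, Rabs (x - x0) <= s -> Rabs (y - y0) <= s -> Cmod (f (x, y)) <= M.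

Local Notation z := ((x0, y0) : C).
Local Notation k := (derivative_kernel f z).

Lemma derivative_kernel_holomorphic : holomorphic_on_punctured_square k x0 y0 s.
Proof.
  intros x y Hx Hy Hn. destruct (Hf x y Hx Hy) as [l Hl]. set (w := (x, y) : C) in *.
  assert (Hdiff := is_Cderive_minus (fun u => u) (fun _ => z) w 1 0 (is_Cderive_id w) (is_Cderive_const z w)).
  assert (Hsq : ((w - z) * (w - z))%C <> 0%C)
    by (pose proof (Cmod_sub_neq_0 w z Hn); apply Cmult_neq_0; apply Cmod_gt_0; lra).
  eexists. apply is_Cderive_mult.
  - exact (is_Cderive_minus f (fun _ => f z) w l 0 Hl (is_Cderive_const (f z) w)).
  - exact (is_Cderive_comp Cinv (fun u => (u - z) * (u - z))%C w _ _
             (is_Cderive_Cinv _ Hsq) (is_Cderive_mult _ _ w _ _ Hdiff Hdiff)).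
Qed.

Lemma Cmod_derivative_kernel_le x y : Rabs (x - x0) <= s -> Rabs (y - y0) <= s ->
  Rabs (x - x0) = s \/ Rabs (y - y0) = s -> Cmod (k (x, y)) <= 2 * M / (s * s).
Proof.
  intros Hx Hy Hside. pose proof (Cmod_sub_ge_square_side x y x0 y0 s Hside) as Hw.
  unfold derivative_kernel.
  assert (Hz : Cmod (f z) <= M) by (apply HM; rewrite Rminus_eq_0, Rabs_R0; lra).
  assert (Hn : ((x, y) - z)%C <> 0%C) by (intros E; rewrite E, Cmod_0 in Hw; lra).
  rewrite Cmod_mult, Cmod_inv, Cmod_mult by (apply Cmult_neq_0; auto).
  assert (Cmod (f (x, y) - f z) <= 2 * M).
  { unfold Cminus. eapply Rle_trans; [apply Cmod_triangle|]. rewrite Cmod_opp.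
    specialize (HM x y Hx Hy). lra. }
  pose proof (Cmod_ge_0 (f (x, y) - f z)).
  unfold Rdiv. apply Rmult_le_compat; auto.
  - apply Rlt_le, Rinv_0_lt_compat. nra.
  - apply Rinv_le_contravar; nra.
Qed.

Lemma Cmod_rect_int_derivative_kernel_le :
  Cmod (rect_int k (x0 - s) (x0 + s) (y0 - s) (y0 + s)) <= 16 * M / s.
Proof.
  destruct (Rabs_offset x0 s) as [Hx1 Hx2]; [lra|].
  destruct (Rabs_offset y0 s) as [Hy1 Hy2]; [lra|].
  eapply Rle_trans.
  - apply (Cmod_rect_int_le k _ _ _ _ (2 * M / (s * s))); try lra.
    + apply (continuous_on_square_boundary _ x0 y0 s s); [lra|apply derivative_kernel_holomorphic].
    + intros x Hx. split; apply Cmod_derivative_kernel_le; auto; try lra; apply Rabs_le; lra.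
    + intros y Hy. split; apply Cmod_derivative_kernel_le; auto; try lra; apply Rabs_le; lra.
  - right. field. lra.
Qed.

Lemma rect_int_derivative_kernel_near l eps del eta : 0 < eps -> 0 < eta < s -> 2 * eta < del ->
  (forall w, Cmod (w - z) < del -> Cmod (f w - f z - l * (w - z)) <= eps * Cmod (w - z)) ->
  Cmod (rect_int k (x0 - eta) (x0 + eta) (y0 - eta) (y0 + eta)
        - l * rect_int (fun w => / (w - z)) (x0 - eta) (x0 + eta) (y0 - eta) (y0 + eta))%C
  <= 8 * eps.
Proof.
  intros Heps Heta Hdel Hlin.
  set (g := fun w => (/ (w - z))%C).
  set (e := fun w => (k w + (- l) * g w)%C).
  assert (Cg := continuous_on_square_boundary g x0 y0 eta eta (conj (proj1 Heta) (Rle_refl _))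
                  (holomorphic_on_punctured_square_Cinv x0 y0 eta)).
  assert (Ck : continuous_on_rect_boundary k (x0 - eta) (x0 + eta) (y0 - eta) (y0 + eta))
    by (apply (continuous_on_square_boundary _ x0 y0 s eta); [lra|apply derivative_kernel_holomorphic]).
  assert (Ce : continuous_on_rect_boundary e (x0 - eta) (x0 + eta) (y0 - eta) (y0 + eta))
    by (apply continuous_on_rect_boundary_plus, continuous_on_rect_boundary_Cmult; auto).
  assert (He : forall x y, Rabs (x - x0) <= eta -> Rabs (y - y0) <= eta ->
                 Rabs (x - x0) = eta \/ Rabs (y - y0) = eta -> Cmod (e (x, y)) <= eps / eta).
  { intros x y Hx Hy Hside. pose proof (Cmod_sub_ge_square_side x y x0 y0 eta Hside) as Hw.
    assert (Hw' : Cmod ((x, y) - z) < del).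
    { eapply Rle_lt_trans; [apply Cmod_le_Rabs_sum|]. simpl. unfold Rminus in Hx, Hy. lra. }
    set (w := (x, y) : C) in *. set (t := Cmod (w - z)) in *.
    assert (Hn : (w - z)%C <> 0%C) by (intros E; unfold t in Hw; rewrite E, Cmod_0 in Hw; lra).
    replace (e w) with ((f w - f z - l * (w - z)) * / ((w - z) * (w - z)))%C
      by (unfold e, g, derivative_kernel; field; auto).
    rewrite Cmod_mult, Cmod_inv, Cmod_mult by (apply Cmult_neq_0; auto). fold t.
    apply Rle_trans with (eps * t * / (t * t)).
    { apply Rmult_le_compat_r; [apply Rlt_le, Rinv_0_lt_compat; nra|]. apply Hlin; auto. }
    replace (eps * t * / (t * t)) with (eps / t) by (field; lra).
    unfold Rdiv. apply Rmult_le_compat_l; [lra|]. apply Rinv_le_contravar; lra. }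
  destruct (Rabs_offset x0 eta) as [Hx1 Hx2]; [lra|].
  destruct (Rabs_offset y0 eta) as [Hy1 Hy2]; [lra|].
  replace (rect_int k _ _ _ _ - l * rect_int g _ _ _ _)%C
    with (rect_int e (x0 - eta) (x0 + eta) (y0 - eta) (y0 + eta)).
  - eapply Rle_trans.
    + apply (Cmod_rect_int_le e _ _ _ _ (eps / eta)); auto; try lra.
      * intros x Hx. split; apply He; auto; try lra; apply Rabs_le; lra.
      * intros y Hy. split; apply He; auto; try lra; apply Rabs_le; lra.
    + right. field. lra.
  - unfold e. rewrite rect_int_plus, rect_int_Cmult; auto; try lra.
    + ring.
    + apply continuous_on_rect_boundary_Cmult; auto.
Qed.

Theorem Cauchy_estimate_square l : is_Cderive f z l -> Cmod l <= 4 * M / s.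
Proof.
  intros Hl.
  enough (4 * Cmod l <= 16 * M / s) by (unfold Rdiv in *; lra).
  apply le_epsilon. intros eps Heps.
  destruct (is_Cderive_approx f z l Hl (eps / 8)) as [del [Hdel Hlin]]; [lra|].
  set (eta := Rmin del s / 3).
  assert (Heta : 0 < eta < s) by (unfold eta; split; [apply Rmin_case|pose proof (Rmin_r del s)]; lra).
  assert (Heta2 : 2 * eta < del) by (unfold eta; pose proof (Rmin_l del s); lra).
  pose proof (Cmod_rect_int_derivative_kernel_le) as Hbig.
  rewrite (rect_int_punctured_square k x0 y0 s eta Heta derivative_kernel_holomorphic) in Hbig.
  pose proof (rect_int_derivative_kernel_near l (eps / 8) del eta ltac:(lra) Heta Heta2 Hlin) as Hnear.
  pose proof (rect_int_Cinv_ge x0 y0 eta (proj1 Heta)) as Hinv.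
  set (I := rect_int (fun w => / (w - z))%C (x0 - eta) (x0 + eta) (y0 - eta) (y0 + eta)) in *.
  set (J := rect_int k (x0 - eta) (x0 + eta) (y0 - eta) (y0 + eta)) in *.
  assert (Hlin_I : Cmod (l * I) <= Cmod J + Cmod (J - l * I)).
  { pose proof (Cmod_triangle J (- (J - l * I))) as T.
    replace (J + - (J - l * I))%C with (l * I)%C in T by ring. rewrite Cmod_opp in T. exact T. }
  rewrite Cmod_mult in Hlin_I. pose proof (Cmod_ge_0 l). nra.
Qed.

End CauchyEstimate.

(** * The map [phiCe] in real coordinates *)

(* For [w = (x, y)] with [x > -1]: [1 + w = rho e^(i theta)], [(1 + w)^e = powr_re + i powr_im]
   and [phiCe c e w = phi_re + i phi_im]. *)
Definition rho x y := sqrt ((1 + x) ^ 2 + y ^ 2).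
Definition theta x y := atan (y / (1 + x)).
Definition powr_re e x y := Rpower (rho x y) e * cos (e * theta x y).
Definition powr_im e x y := Rpower (rho x y) e * sin (e * theta x y).
Definition phi_re c e x y := x + c * powr_re e x y.
Definition phi_im c e x y := y + c * powr_im e x y.

Lemma phiCe_coords c e x y : -1 < x -> phiCe c e (x, y) = (phi_re c e x y, phi_im c e x y).
Proof.
  intros Hx. unfold phiCe, Cpow_pr.
  replace (RtoC 1 + (x, y))%C with ((1 + x, 0 + y) : C) by reflexivity.
  assert (Hc : Cmod (1 + x, 0 + y) = rho x y) by (unfold Cmod, rho; simpl; f_equal; ring).
  destruct (Req_EM_T (Cmod (1 + x, 0 + y)) 0) as [E|E].
  { exfalso. pose proof (re_le_Cmod (1 + x, 0 + y)) as H. rewrite E in H.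
    unfold Re in H; simpl in H. rewrite Rabs_right in H by lra. lra. }
  unfold CLog, Carg, Cexp. simpl.
  destruct (Rlt_dec 0 (1 + x)) as [_|N]; [|lra].
  rewrite Hc. unfold phi_re, phi_im, powr_re, powr_im, Rpower, theta, Cplus, Cmult; simpl.
  replace (0 + y) with y by ring.
  replace (e * ln (rho x y) - 0 * atan (y / (1 + x))) with (e * ln (rho x y)) by ring.
  replace (e * atan (y / (1 + x)) + 0 * ln (rho x y)) with (e * atan (y / (1 + x))) by ring.
  apply injective_projections; simpl; ring.
Qed.

Lemma rho_pos x y : -1 < x -> 0 < rho x y.
Proof.
  intros Hx. unfold rho. apply sqrt_lt_R0.
  assert (0 < (1 + x) ^ 2) by (apply pow_lt; lra). pose proof (pow2_ge_0 y). lra.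
Qed.

Lemma rho_sqr x y : rho x y * rho x y = (1 + x) ^ 2 + y ^ 2.
Proof. unfold rho. apply sqrt_sqrt. pose proof (pow2_ge_0 (1 + x)). pose proof (pow2_ge_0 y). lra. Qed.

Lemma rho_ge_1 x y : 0 <= x -> 1 <= rho x y.
Proof.
  intros Hx. unfold rho. apply Rle_trans with (sqrt 1); [rewrite sqrt_1; lra|].
  apply sqrt_le_1_alt.
  pose proof (pow2_ge_0 y). replace ((1 + x) ^ 2) with (1 + 2 * x + x * x) by ring. nra.
Qed.

Lemma Rabs_le_rho x y : Rabs y <= rho x y.
Proof.
  unfold rho. rewrite <- sqrt_Rsqr_abs. apply sqrt_le_1_alt. unfold Rsqr. simpl.
  pose proof (Rle_0_sqr (1 + x)). unfold Rsqr in *. lra.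
Qed.

Lemma le_rho x y : 0 <= x -> x <= rho x y.
Proof.
  intros Hx. unfold rho. rewrite <- (sqrt_square x) at 1 by lra. apply sqrt_le_1_alt.
  pose proof (Rle_0_sqr y). unfold Rsqr in *. simpl. nra.
Qed.

Lemma rho_opp x y : rho x (- y) = rho x y.
Proof. unfold rho. f_equal. ring. Qed.

Lemma sqrt_1_plus_sqr_tan x y : -1 < x -> sqrt (1 + (y / (1 + x))²) = rho x y / (1 + x).
Proof.
  intros Hx. assert (Hr := rho_pos x y Hx).
  rewrite <- (sqrt_square (rho x y / (1 + x))) by (apply Rlt_le, Rdiv_lt_0_compat; lra).
  f_equal. unfold Rsqr.
  replace (rho x y / (1 + x) * (rho x y / (1 + x))) with ((rho x y * rho x y) / ((1 + x) * (1 + x)))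
    by (field; lra).
  rewrite rho_sqr. field. lra.
Qed.

Lemma cos_theta x y : -1 < x -> cos (theta x y) = (1 + x) / rho x y.
Proof.
  intros Hx. unfold theta. rewrite cos_atan, sqrt_1_plus_sqr_tan by auto.
  assert (Hr := rho_pos x y Hx). field. lra.
Qed.

Lemma sin_theta x y : -1 < x -> sin (theta x y) = y / rho x y.
Proof.
  intros Hx. unfold theta. rewrite sin_atan, sqrt_1_plus_sqr_tan by auto.
  assert (Hr := rho_pos x y Hx). field. lra.
Qed.

Lemma theta_bound x y : - PI / 2 < theta x y < PI / 2.
Proof. apply atan_bound. Qed.

Lemma theta_opp x y : theta x (- y) = - theta x y.
Proof. unfold theta. rewrite <- atan_opp. f_equal. unfold Rdiv. ring. Qed.

Lemma theta_nonneg x y : -1 < x -> 0 <= y -> 0 <= theta x y.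
Proof.
  intros Hx Hy. unfold theta. rewrite <- atan_0.
  destruct (Req_dec y 0) as [->|Hy0]; [unfold Rdiv; rewrite Rmult_0_l; lra|].
  apply Rlt_le, atan_increasing, Rdiv_lt_0_compat; lra.
Qed.

Lemma theta_le x y1 y2 : -1 < x -> y1 <= y2 -> theta x y1 <= theta x y2.
Proof.
  intros Hx H. unfold theta. destruct (Req_dec y1 y2) as [->|Hne]; [lra|].
  apply Rlt_le, atan_increasing. unfold Rdiv. apply Rmult_lt_compat_r; [|lra].
  apply Rinv_0_lt_compat; lra.
Qed.

Lemma Rmult_theta_bound k x y : 0 <= k <= 1 -> Rabs (k * theta x y) <= k * (PI / 2).
Proof.
  intros Hk. pose proof (theta_bound x y). rewrite Rabs_mult, Rabs_right by lra.
  apply Rmult_le_compat_l; [lra|]. apply Rabs_le; lra.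
Qed.

Lemma cos_mul_theta_ge k x y : 0 <= k < 1 -> cos (k * (PI / 2)) <= cos (k * theta x y).
Proof.
  intros Hk. pose proof PI_RGT_0. pose proof (Rmult_theta_bound k x y ltac:(lra)) as Hb.
  replace (cos (k * theta x y)) with (cos (Rabs (k * theta x y))).
  - apply cos_decr_1; try apply Rabs_pos; nra.
  - unfold Rabs; destruct Rcase_abs; [apply cos_neg|reflexivity].
Qed.

Lemma cos_mul_theta_pos k x y : 0 <= k < 1 -> 0 < cos (k * theta x y).
Proof.
  intros Hk. pose proof PI_RGT_0. eapply Rlt_le_trans; [|apply cos_mul_theta_ge; auto].
  apply cos_gt_0; nra.
Qed.

Lemma sin_mul_theta_nonneg k x y : 0 <= k <= 1 -> -1 < x -> 0 <= y -> 0 <= sin (k * theta x y).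
Proof.
  intros Hk Hx Hy. pose proof (theta_nonneg x y Hx Hy). pose proof (theta_bound x y).
  pose proof PI_RGT_0. apply sin_ge_0; [nra|].
  apply Rle_trans with (k * (PI / 2)); [apply Rmult_le_compat_l; lra|nra].
Qed.

Lemma Rpower_rho_pos e x y : 0 < Rpower (rho x y) e.
Proof. apply exp_pos. Qed.

Lemma Rpower_rho_ge_1 e x y : 0 <= x -> 0 <= e -> 1 <= Rpower (rho x y) e.
Proof.
  intros Hx He. rewrite <- (Rpower_O (rho x y)) by (pose proof (rho_ge_1 x y Hx); lra).
  apply Rle_Rpower; [apply rho_ge_1|]; auto.
Qed.

Lemma Rpower_rho_le_rho e x y : 0 <= x -> 0 <= e <= 1 -> Rpower (rho x y) e <= rho x y.
Proof.
  intros Hx He. pose proof (rho_ge_1 x y Hx).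
  rewrite <- (Rpower_1 (rho x y)) at 2 by lra. apply Rle_Rpower; lra.
Qed.

Lemma powr_re_opp e x y : powr_re e x (- y) = powr_re e x y.
Proof.
  unfold powr_re. rewrite rho_opp, theta_opp, <- cos_neg. f_equal. f_equal. ring.
Qed.

Lemma powr_im_opp e x y : powr_im e x (- y) = - powr_im e x y.
Proof.
  unfold powr_im. rewrite rho_opp, theta_opp.
  replace (e * - theta x y) with (- (e * theta x y)) by ring. rewrite sin_neg. ring.
Qed.

Lemma powr_re_pos e x y : 0 <= e < 1 -> 0 < powr_re e x y.
Proof.
  intros He. apply Rmult_lt_0_compat; [apply Rpower_rho_pos|apply cos_mul_theta_pos; auto].
Qed.

Lemma powr_im_nonneg e x y : 0 <= e <= 1 -> -1 < x -> 0 <= y -> 0 <= powr_im e x y.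
Proof.
  intros He Hx Hy. apply Rmult_le_pos; [apply Rlt_le, Rpower_rho_pos|].
  apply sin_mul_theta_nonneg; auto.
Qed.

Lemma phi_re_opp c e x y : phi_re c e x (- y) = phi_re c e x y.
Proof. unfold phi_re. rewrite powr_re_opp. reflexivity. Qed.

Lemma phi_im_opp c e x y : phi_im c e x (- y) = - phi_im c e x y.
Proof. unfold phi_im. rewrite powr_im_opp. ring. Qed.

Lemma phi_re_gt c e x y : 0 < c -> 0 < e < 1 -> x < phi_re c e x y.
Proof.
  intros Hc He. unfold phi_re. pose proof (powr_re_pos e x y ltac:(lra)).
  pose proof (Rmult_lt_0_compat c _ Hc H). lra.
Qed.

Lemma phi_im_ge c e x y : 0 < c -> 0 < e < 1 -> -1 < x -> 0 <= y -> y <= phi_im c e x y.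
Proof.
  intros Hc He Hx Hy. unfold phi_im. pose proof (powr_im_nonneg e x y ltac:(lra) Hx Hy).
  pose proof (Rmult_le_pos c _ (Rlt_le _ _ Hc) H). lra.
Qed.

Lemma phi_im_le c e x y : 0 < c -> 0 < e < 1 -> -1 < x -> y <= 0 -> phi_im c e x y <= y.
Proof.
  intros Hc He Hx Hy. replace y with (- - y) by ring. rewrite phi_im_opp.
  pose proof (phi_im_ge c e x (- y) Hc He Hx). lra.
Qed.

Definition powr_dmod e x y := e * Rpower (rho x y) e / rho x y.

Lemma powr_im_derive e x y : -1 < x ->
  is_derive (powr_im e x) y (powr_dmod e x y * cos ((1 - e) * theta x y)).
Proof.
  intros Hx. assert (Hr := rho_pos x y Hx). assert (Hr2 := rho_sqr x y).
  replace ((1 - e) * theta x y) with (theta x y - e * theta x y) by ring.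
  rewrite cos_minus, cos_theta, sin_theta by auto.
  unfold powr_dmod, powr_im, Rpower, theta. unfold rho at 1. auto_derive.
  - split; [|split; auto].
    + simpl in Hr2. nra.
    + fold (rho x y). auto.
  - fold (rho x y). unfold rho in Hr2 |- *.
    set (r := sqrt ((1 + x) ^ 2 + y ^ 2)) in *.
    replace (sqrt ((1 + x) * ((1 + x) * 1) + y * (y * 1))) with r by (unfold r; f_equal; ring).
    assert (Hr' : 0 < r) by (unfold r; fold (rho x y); auto).
    replace (1 + y * / (1 + x) * (y * / (1 + x) * 1)) with (r * r / ((1 + x) * (1 + x)))
      by (rewrite Hr2; field; lra).
    unfold Rdiv. field. split; lra.
Qed.

Lemma powr_re_derive e x y : -1 < x ->
  is_derive (powr_re e x) y (powr_dmod e x y * sin ((1 - e) * theta x y)).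
Proof.
  intros Hx. assert (Hr := rho_pos x y Hx). assert (Hr2 := rho_sqr x y).
  replace ((1 - e) * theta x y) with (theta x y - e * theta x y) by ring.
  rewrite sin_minus, cos_theta, sin_theta by auto.
  unfold powr_dmod, powr_re, Rpower, theta. unfold rho at 1. auto_derive.
  - split; [|split; auto].
    + simpl in Hr2. nra.
    + fold (rho x y). auto.
  - fold (rho x y). unfold rho in Hr2 |- *.
    set (r := sqrt ((1 + x) ^ 2 + y ^ 2)) in *.
    replace (sqrt ((1 + x) * ((1 + x) * 1) + y * (y * 1))) with r by (unfold r; f_equal; ring).
    assert (Hr' : 0 < r) by (unfold r; fold (rho x y); auto).
    replace (1 + y * / (1 + x) * (y * / (1 + x) * 1)) with (r * r / ((1 + x) * (1 + x)))
      by (rewrite Hr2; field; lra).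
    unfold Rdiv. field. split; lra.
Qed.

Lemma powr_dmod_pos e x y : -1 < x -> 0 < e -> 0 < powr_dmod e x y.
Proof.
  intros Hx He. unfold powr_dmod. pose proof (Rpower_rho_pos e x y). pose proof (rho_pos x y Hx).
  apply Rdiv_lt_0_compat; nra.
Qed.

Lemma powr_dmod_le e x y : 0 <= x -> 0 < e < 1 -> powr_dmod e x y <= e.
Proof.
  intros Hx He. unfold powr_dmod. pose proof (rho_ge_1 x y Hx).
  pose proof (Rpower_rho_le_rho e x y Hx ltac:(lra)).
  apply Rmult_le_reg_r with (rho x y); [lra|]. unfold Rdiv.
  rewrite Rmult_assoc, Rinv_l by lra. nra.
Qed.

Lemma phi_im_derive c e x y : -1 < x ->
  is_derive (phi_im c e x) y (1 + c * (powr_dmod e x y * cos ((1 - e) * theta x y))).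
Proof.
  intros Hx. apply (is_derive_plus (K:=R_AbsRing) (V:=R_NormedModule) (fun y => y)).
  - apply (is_derive_id (K:=R_AbsRing)).
  - apply (is_derive_scal (powr_im e x)). apply powr_im_derive; auto.
Qed.

Lemma phi_im_increasing c e x y1 y2 : 0 < c -> 0 < e < 1 -> -1 < x -> y1 < y2 ->
  phi_im c e x y1 < phi_im c e x y2.
Proof.
  intros Hc He Hx Hy.
  apply (incr_function (phi_im c e x) m_infty p_infty
           (fun y => 1 + c * (powr_dmod e x y * cos ((1 - e) * theta x y)))); simpl; auto.
  - intros; apply phi_im_derive; auto.
  - intros y _ _. pose proof (powr_dmod_pos e x y Hx ltac:(lra)).
    pose proof (cos_mul_theta_pos (1 - e) x y ltac:(lra)).
    pose proof (Rmult_lt_0_compat _ _ H H0). pose proof (Rmult_lt_0_compat _ _ Hc H1). lra.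
Qed.

Lemma phi_im_surjective c e x b : 0 < c -> 0 < e < 1 -> -1 < x -> exists y, phi_im c e x y = b.
Proof.
  intros Hc He Hx.
  destruct (IVT (fun y => phi_im c e x y - b) (- Rabs b - 1) (Rabs b + 1)) as [y [_ Hy]].
  - apply continuity_minus; [|apply continuity_const; intros u v; auto].
    intros y. apply continuity_pt_filterlim.
    apply (ex_derive_continuous (K:=R_AbsRing) (V:=R_NormedModule)).
    eexists. apply phi_im_derive; auto.
  - pose proof (Rabs_pos b); lra.
  - pose proof (phi_im_le c e x (- Rabs b - 1) Hc He Hx). pose proof (Rle_abs (- b)).
    rewrite Rabs_Ropp in H0. pose proof (Rabs_pos b). lra.
  - pose proof (phi_im_ge c e x (Rabs b + 1) Hc He Hx). pose proof (Rabs_pos b).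
    pose proof (Rle_abs b). lra.
  - exists y. lra.
Qed.

Definition im_level c e b x := epsilon (inhabits 0) (fun y => phi_im c e x y = b).

Lemma phi_im_level c e b x : 0 < c -> 0 < e < 1 -> -1 < x -> phi_im c e x (im_level c e b x) = b.
Proof.
  intros Hc He Hx. unfold im_level.
  apply (epsilon_spec (inhabits 0) (fun y => phi_im c e x y = b)). apply phi_im_surjective; auto.
Qed.

Lemma im_level_unique c e b x y : 0 < c -> 0 < e < 1 -> -1 < x -> phi_im c e x y = b ->
  im_level c e b x = y.
Proof.
  intros Hc He Hx H. pose proof (phi_im_level c e b x Hc He Hx) as Hl.
  destruct (Rtotal_order (im_level c e b x) y) as [L|[L|L]]; auto.
  - pose proof (phi_im_increasing c e x _ _ Hc He Hx L). lra.
  - pose proof (phi_im_increasing c e x _ _ Hc He Hx L). lra.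
Qed.

Lemma ball_R_Rabs (x y eps : R) : ball x eps y <-> Rabs (y - x) < eps.
Proof. reflexivity. Qed.

Lemma continuous_increasing_level (F : R -> R -> R) (g : R -> R) x del0 : 0 < del0 ->
  (forall x', Rabs (x' - x) < del0 -> forall y1 y2, y1 < y2 -> F x' y1 < F x' y2) ->
  (forall x', Rabs (x' - x) < del0 -> F x' (g x') = F x (g x)) ->
  (forall y, continuous (fun x' => F x' y) x) ->
  continuous g x.
Proof.
  intros Hdel0 Hincr Hlevel HF P [eps HP].
  assert (Hx : Rabs (x - x) < del0) by (rewrite Rminus_eq_0, Rabs_R0; lra).
  assert (Hp : F x (g x) < F x (g x + eps)) by (apply Hincr; auto; destruct eps; simpl; lra).
  assert (Hm : F x (g x - eps) < F x (g x)) by (apply Hincr; auto; destruct eps; simpl; lra).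
  assert (Hp' : 0 < F x (g x + eps) - F x (g x)) by lra.
  assert (Hm' : 0 < F x (g x) - F x (g x - eps)) by lra.
  destruct (HF (g x + eps) _ (locally_ball _ (mkposreal _ Hp'))) as [d1 H1].
  destruct (HF (g x - eps) _ (locally_ball _ (mkposreal _ Hm'))) as [d2 H2].
  exists (mkposreal _ (Rmin_pos _ _ (Rmin_pos _ _ (cond_pos d1) (cond_pos d2)) Hdel0)).
  intros x' Hx'. apply HP. simpl in Hx'. rewrite ball_R_Rabs in Hx' |- *.
  assert (Hx1 : Rabs (x' - x) < d1) by (eapply Rlt_le_trans; [exact Hx'|];
    eapply Rle_trans; [apply Rmin_l|apply Rmin_l]).
  assert (Hx2 : Rabs (x' - x) < d2) by (eapply Rlt_le_trans; [exact Hx'|];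
    eapply Rle_trans; [apply Rmin_l|apply Rmin_r]).
  assert (Hx3 : Rabs (x' - x) < del0) by (eapply Rlt_le_trans; [exact Hx'|apply Rmin_r]).
  specialize (H1 x' Hx1). specialize (H2 x' Hx2). rewrite ball_R_Rabs in H1, H2. simpl in H1, H2.
  apply Rabs_lt_between in H1. apply Rabs_lt_between in H2.
  pose proof (Hlevel x' Hx3) as Hl.
  apply Rabs_def1.
  - destruct (Rlt_le_dec (g x' - g x) eps) as [L|L]; auto.
    destruct (Req_dec (g x + eps) (g x')) as [E|E].
    + rewrite <- E in Hl. lra.
    + pose proof (Hincr x' Hx3 (g x + eps) (g x') ltac:(lra)). lra.
  - destruct (Rlt_le_dec (- eps) (g x' - g x)) as [L|L]; auto.
    destruct (Req_dec (g x') (g x - eps)) as [E|E].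
    + rewrite E in Hl. lra.
    + pose proof (Hincr x' Hx3 (g x') (g x - eps) ltac:(lra)). lra.
Qed.

Lemma continuous_phi_im_abscissa c e x y : -1 < x -> continuous (fun x => phi_im c e x y) x.
Proof.
  intros Hx. apply (ex_derive_continuous (K:=R_AbsRing) (V:=R_NormedModule)).
  unfold phi_im, powr_im, Rpower, theta, rho. auto_derive.
  assert (0 < (1 + x) * ((1 + x) * 1)) by nra. pose proof (Rle_0_sqr y). unfold Rsqr in *.
  repeat split; try lra. apply sqrt_lt_R0. lra.
Qed.

Lemma im_level_continuous c e b x : 0 < c -> 0 < e < 1 -> -1 < x ->
  continuous (im_level c e b) x.
Proof.
  intros Hc He Hx. apply (continuous_increasing_level (phi_im c e) _ x (x + 1)); [lra| | |].
  - intros x' Hx'. apply Rabs_lt_between in Hx'. intros. apply phi_im_increasing; auto; lra.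
  - intros x' Hx'. apply Rabs_lt_between in Hx'. rewrite !phi_im_level; auto; lra.
  - intros y. apply continuous_phi_im_abscissa; auto.
Qed.

Lemma continuous_phi_re_along c e (g : R -> R) x : -1 < x -> continuous g x ->
  continuous (fun x => phi_re c e x (g x)) x.
Proof.
  intros Hx Hg.
  assert (Hcomp : forall h : R -> R, ex_derive h (g x) -> continuous (fun x => h (g x)) x)
    by (intros h Hh; apply (continuous_comp g h); auto;
        apply (ex_derive_continuous (K:=R_AbsRing) (V:=R_NormedModule)); auto).
  assert (Hrat : continuous (fun x => g x / (1 + x)) x).
  { apply (continuous_mult (K:=R_AbsRing) g (fun x => / (1 + x))); auto.
    apply (ex_derive_continuous (K:=R_AbsRing) (V:=R_NormedModule)). auto_derive. lra. }
  assert (Hsum : continuous (fun x => (1 + x) ^ 2 + g x ^ 2) x).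
  { apply (continuous_plus (V:=R_NormedModule) (fun x => (1 + x) ^ 2) (fun x => g x ^ 2)).
    - apply (ex_derive_continuous (K:=R_AbsRing) (V:=R_NormedModule)). auto_derive. auto.
    - apply (Hcomp (fun u => u ^ 2)). auto_derive. auto. }
  assert (Hpos : 0 < (1 + x) ^ 2 + g x ^ 2)
    by (pose proof (pow2_ge_0 (g x)); assert (0 < (1 + x) ^ 2) by (apply pow_lt; lra); lra).
  unfold phi_re, powr_re, Rpower, theta, rho.
  apply (continuous_plus (V:=R_NormedModule) (fun x => x)); [apply continuous_id|].
  apply (continuous_scal_r (K:=R_AbsRing) (V:=R_NormedModule) c).
  apply (continuous_mult (K:=R_AbsRing)).
  - apply (continuous_comp (fun x => (1 + x) ^ 2 + g x ^ 2) (fun u => exp (e * ln (sqrt u))));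
      auto.
    apply (ex_derive_continuous (K:=R_AbsRing) (V:=R_NormedModule)).
    auto_derive. repeat split; auto. apply sqrt_lt_R0; auto.
  - apply (continuous_comp (fun x => g x / (1 + x)) (fun u => cos (e * atan u))); auto.
    apply (ex_derive_continuous (K:=R_AbsRing) (V:=R_NormedModule)). auto_derive. auto.
Qed.

(* Follow the level curve [phi_im = b] to the right of [x0] until [phi_re] reaches [a]. *)
Lemma U_region_of_phi_re_lt c e a b x0 y0 : 0 < c -> 0 < e < 1 -> 0 <= x0 ->
  phi_im c e x0 y0 = b -> phi_re c e x0 y0 < a -> U_region c e (a, b).
Proof.
  intros Hc He Hx0 HY HX.
  set (k := fun x => phi_re c e x (im_level c e b x) - a).
  assert (Hy0 : im_level c e b x0 = y0) by (apply im_level_unique; auto; lra).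
  set (X := Rmax a x0 + 1).
  assert (HX0 : x0 < X) by (unfold X; pose proof (Rmax_r a x0); lra).
  destruct (Ranalysis5.IVT_interv k x0 X) as [x1 [Hx1 Hk1]]; auto.
  - intros t Ht. apply continuity_pt_filterlim. unfold k.
    apply (continuous_minus (V:=R_NormedModule) (fun x => phi_re c e x (im_level c e b x))
             (fun _ => a)); [|apply continuous_const].
    apply continuous_phi_re_along; [lra|]. apply im_level_continuous; auto; lra.
  - unfold k. rewrite Hy0. lra.
  - unfold k. pose proof (phi_re_gt c e X (im_level c e b X) Hc He).
    pose proof (Rmax_l a x0). unfold X in *. lra.
  - assert (Hx1' : x0 < x1).
    { destruct (Req_dec x0 x1) as [E|E]; [|lra].
      subst x1. unfold k in Hk1. rewrite Hy0 in Hk1. lra. }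
    exists (x1, im_level c e b x1). split; [simpl; lra|].
    rewrite phiCe_coords by lra. unfold k in Hk1. rewrite phi_im_level by (auto; lra).
    f_equal. lra.
Qed.

Lemma Rle_of_derive_nonneg (f df : R -> R) a b : a <= b ->
  (forall t, a <= t <= b -> is_derive f t (df t)) -> (forall t, a <= t <= b -> 0 <= df t) ->
  f a <= f b.
Proof.
  intros Hab Hd Hn. destruct (Req_dec a b) as [<-|L]; [lra|].
  destruct (MVT_cor3 f df a b ltac:(lra)) as [t [H1 [H2 H3]]].
  - intros x Hx1 Hx2. apply is_derive_Reals. apply Hd; lra.
  - specialize (Hn t (conj H1 H2)). nra.
Qed.

Lemma is_derive_linear k t : is_derive (fun t => k * t) t k.
Proof. auto_derive; auto. ring. Qed.

Lemma powr_im_le e x y y' : 0 < e < 1 -> -1 < x -> y <= y' -> powr_im e x y <= powr_im e x y'.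
Proof.
  intros He Hx Hy.
  apply (Rle_of_derive_nonneg (powr_im e x)
           (fun t => powr_dmod e x t * cos ((1 - e) * theta x t)) y y' Hy).
  - intros t _. apply powr_im_derive; auto.
  - intros t _. apply Rmult_le_pos; [apply Rlt_le, powr_dmod_pos; lra|].
    apply Rlt_le, cos_mul_theta_pos. lra.
Qed.

Lemma powr_re_plus_le e x y y' : 0 < e < 1 -> 0 <= x -> y <= y' ->
  powr_re e x y + e * y <= powr_re e x y' + e * y'.
Proof.
  intros He Hx Hy.
  apply (Rle_of_derive_nonneg (fun t => powr_re e x t + e * t)
           (fun t => powr_dmod e x t * sin ((1 - e) * theta x t) + e) y y' Hy).
  - intros t _. apply (is_derive_plus (K:=R_AbsRing) (V:=R_NormedModule) (powr_re e x)).
    + apply powr_re_derive; lra.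
    + apply is_derive_linear.
  - intros t _. pose proof (powr_dmod_pos e x t ltac:(lra) ltac:(lra)).
    pose proof (powr_dmod_le e x t Hx He). pose proof (SIN_bound ((1 - e) * theta x t)). nra.
Qed.

Lemma phi_im_minus_le c e x y y' : 0 < c -> 0 < e < 1 -> 0 <= x -> y <= y' ->
  phi_im c e x y' - (1 + c * e) * y' <= phi_im c e x y - (1 + c * e) * y.
Proof.
  intros Hc He Hx Hy.
  enough ((1 + c * e) * y - phi_im c e x y <= (1 + c * e) * y' - phi_im c e x y') by lra.
  apply (Rle_of_derive_nonneg (fun t => (1 + c * e) * t - phi_im c e x t)
    (fun t => (1 + c * e) - (1 + c * (powr_dmod e x t * cos ((1 - e) * theta x t)))) y y' Hy).
  - intros t _. apply (is_derive_minus (K:=R_AbsRing) (V:=R_NormedModule)).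
    + apply is_derive_linear.
    + apply phi_im_derive; lra.
  - intros t _. pose proof (powr_dmod_pos e x t ltac:(lra) ltac:(lra)).
    pose proof (powr_dmod_le e x t Hx He). pose proof (COS_bound ((1 - e) * theta x t)).
    assert (powr_dmod e x t * cos ((1 - e) * theta x t) <= e) by nra. nra.
Qed.

Lemma tan_le a b : - PI / 2 < a -> a <= b -> b < PI / 2 -> tan a <= tan b.
Proof.
  intros H1 H2 H3. destruct (Req_dec a b) as [->|L]; [lra|].
  apply Rlt_le, tan_increasing; lra.
Qed.

Lemma sin_le_tan_cos a b : - PI / 2 < a -> a <= b -> b < PI / 2 -> sin a <= tan b * cos a.
Proof.
  intros H1 H2 H3. assert (Hc : 0 < cos a) by (apply cos_gt_0; lra).
  pose proof (tan_le a b H1 H2 H3) as H. unfold tan in H at 1.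
  replace (sin a) with (sin a / cos a * cos a) by (field; lra).
  apply Rmult_le_compat_r; lra.
Qed.

Lemma mul_theta_bound k x y : 0 < k < 1 -> - PI / 2 < k * theta x y < PI / 2.
Proof.
  intros Hk. pose proof (theta_bound x y). pose proof PI_RGT_0. split.
  - apply Rlt_le_trans with (k * (- PI / 2)); [nra|]. apply Rmult_le_compat_l; lra.
  - apply Rle_lt_trans with (k * (PI / 2)); [apply Rmult_le_compat_l; lra|nra].
Qed.

Lemma powr_re_minus_tan_le e x y y' : 0 < e < 1 -> 0 <= x -> y <= y' ->
  let T := tan ((1 - e) * theta x y') in
  powr_re e x y' - T * powr_im e x y' <= powr_re e x y - T * powr_im e x y.
Proof.
  intros He Hx Hy T.
  enough (T * powr_im e x y - powr_re e x y <= T * powr_im e x y' - powr_re e x y') by lra.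
  apply (Rle_of_derive_nonneg (fun t => T * powr_im e x t - powr_re e x t)
    (fun t => T * (powr_dmod e x t * cos ((1 - e) * theta x t))
              - powr_dmod e x t * sin ((1 - e) * theta x t)) y y' Hy).
  - intros t _. apply (is_derive_minus (K:=R_AbsRing) (V:=R_NormedModule)).
    + apply (is_derive_scal (powr_im e x)). apply powr_im_derive; lra.
    + apply powr_re_derive; lra.
  - intros t Ht. pose proof (powr_dmod_pos e x t ltac:(lra) ltac:(lra)).
    assert (sin ((1 - e) * theta x t) <= T * cos ((1 - e) * theta x t)).
    { apply sin_le_tan_cos; try apply (mul_theta_bound (1 - e)); try lra.
      apply Rmult_le_compat_l; [lra|]. apply theta_le; lra. }
    nra.
Qed.

(** * Squares inside [U_region] *)

Lemma U_region_of_Rpower_lt c e a b : 0 < c -> 0 < e < 1 ->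
  c * Rpower (sqrt (1 + b ^ 2)) e < a -> U_region c e (a, b).
Proof.
  intros Hc He H.
  destruct (phi_im_surjective c e 0 b Hc He) as [y0 Hy0]; [lra|].
  apply (U_region_of_phi_re_lt c e a b 0 y0); auto; try lra.
  assert (Hyb : y0 ^ 2 <= b ^ 2).
  { destruct (Rle_lt_dec 0 y0) as [P|N].
    - pose proof (phi_im_ge c e 0 y0 Hc He ltac:(lra) P). simpl. nra.
    - pose proof (phi_im_le c e 0 y0 Hc He ltac:(lra) ltac:(lra)). simpl. nra. }
  assert (Hr : rho 0 y0 <= sqrt (1 + b ^ 2)) by (unfold rho; apply sqrt_le_1_alt; simpl in *; nra).
  pose proof (rho_pos 0 y0 ltac:(lra)).
  assert (Rpower (rho 0 y0) e <= Rpower (sqrt (1 + b ^ 2)) e) by (apply Rle_Rpower_l; lra).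
  pose proof (Rpower_rho_pos e 0 y0). pose proof (COS_bound (e * theta 0 y0)).
  assert (Hle : powr_re e 0 y0 <= Rpower (sqrt (1 + b ^ 2)) e) by (unfold powr_re; nra).
  unfold phi_re. pose proof (Rmult_le_compat_l c _ _ (Rlt_le _ _ Hc) Hle). lra.
Qed.

Lemma phi_re_ge c e x y : 0 < c -> 0 <= x -> 0 < e < 1 ->
  c * cos (e * (PI / 2)) * Rpower (rho x y) e <= phi_re c e x y.
Proof.
  intros Hc Hx He. unfold phi_re, powr_re.
  pose proof (cos_mul_theta_ge e x y ltac:(lra)). pose proof (Rpower_rho_pos e x y).
  assert (Rpower (rho x y) e * cos (e * (PI / 2)) <= Rpower (rho x y) e * cos (e * theta x y))
    by (apply Rmult_le_compat_l; lra).
  nra.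
Qed.

Lemma Rabs_phi_im_le c e x y : 0 < c -> 0 <= x -> 0 < e < 1 ->
  Rabs (phi_im c e x y) <= (1 + c) * rho x y.
Proof.
  intros Hc Hx He. unfold phi_im, powr_im.
  pose proof (Rabs_le_rho x y). pose proof (Rpower_rho_le_rho e x y Hx ltac:(lra)).
  pose proof (Rpower_rho_pos e x y).
  assert (Rabs (sin (e * theta x y)) <= 1) by (apply Rabs_le, SIN_bound).
  eapply Rle_trans; [apply Rabs_triang|].
  rewrite !Rabs_mult, (Rabs_right c), (Rabs_right (Rpower _ _)) by lra.
  pose proof (Rabs_pos (sin (e * theta x y))).
  assert (Hle : Rpower (rho x y) e * Rabs (sin (e * theta x y)) <= rho x y) by nra.
  pose proof (Rmult_le_compat_l c _ _ (Rlt_le _ _ Hc) Hle). lra.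
Qed.

Lemma Cmod_phi_le c e x y : 0 < c -> 0 <= x -> 0 < e < 1 ->
  Cmod (phi_re c e x y, phi_im c e x y) <= (2 + 2 * c) * rho x y.
Proof.
  intros Hc Hx He. eapply Rle_trans; [apply Cmod_le_Rabs_sum|]. simpl.
  pose proof (Rabs_phi_im_le c e x y Hc Hx He). pose proof (le_rho x y Hx).
  pose proof (Rpower_rho_le_rho e x y Hx ltac:(lra)).
  pose proof (powr_re_pos e x y ltac:(lra)). pose proof (COS_bound (e * theta x y)).
  pose proof (Rpower_rho_pos e x y).
  assert (powr_re e x y <= rho x y) by (unfold powr_re in *; nra).
  rewrite Rabs_right by (unfold phi_re; nra). unfold phi_re. nra.
Qed.

Section LargerExponent.

Variables (c D e e' : R).
Hypotheses (Hc : 0 < c) (HD : 0 < D) (He : 0 < e) (Hee' : e < e') (He' : e' < 1).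

Let ka := cos (e' * (PI / 2)).
Let K0 := Rpower (3 + D) e.
(* [r_large] is where [rho ^ (e' - e)] reaches [(c K0 + 2) / (D ka)], so that the term
   [D ka rho ^ e'] of [phi_re] beats [c ((3 + D) rho) ^ e + 2]. *)
Let r_large := Rpower (Rmax ((c * K0 + 2) / (D * ka)) 1) (/ (e' - e)).

Lemma ka_pos : 0 < ka.
Proof. pose proof PI_RGT_0. apply cos_gt_0; nra. Qed.

Lemma r_large_ge_1 : 1 <= r_large.
Proof.
  unfold r_large. set (m := Rmax ((c * K0 + 2) / (D * ka)) 1).
  assert (Hm : 1 <= m) by apply Rmax_r.
  rewrite <- (Rpower_O m) by lra.
  apply Rle_Rpower; [auto|]. apply Rlt_le, Rinv_0_lt_compat. lra.
Qed.

Lemma Rpower_gap r : r_large <= r -> c * K0 * Rpower r e + 2 <= D * ka * Rpower r e'.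
Proof.
  intros Hr. pose proof r_large_ge_1. pose proof ka_pos.
  set (Tn := (c * K0 + 2) / (D * ka)).
  assert (HT : Tn <= Rpower r (e' - e)).
  { apply Rle_trans with (Rmax Tn 1); [apply Rmax_l|].
    replace (Rmax Tn 1) with (Rpower r_large (e' - e)).
    - apply Rle_Rpower_l; lra.
    - unfold r_large. fold Tn. rewrite Rpower_mult.
      replace (/ (e' - e) * (e' - e)) with 1 by (field; lra).
      apply Rpower_1. pose proof (Rmax_r Tn 1). lra. }
  assert (He1 : 1 <= Rpower r e) by (rewrite <- (Rpower_O r) by lra; apply Rle_Rpower; lra).
  replace (Rpower r e') with (Rpower r e * Rpower r (e' - e))
    by (rewrite <- Rpower_plus; f_equal; ring).
  assert (Hc1 : D * ka * Tn = c * K0 + 2) by (unfold Tn; field; nra).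
  assert (0 < D * ka) by nra.
  assert (D * ka * Tn * Rpower r e <= D * ka * Rpower r (e' - e) * Rpower r e)
    by (apply Rmult_le_compat_r; [lra|]; apply Rmult_le_compat_l; lra).
  unfold K0 in *. nra.
Qed.

Lemma U_region_of_near_phi x1 y1 a b : 0 < x1 -> r_large <= rho x1 y1 ->
  Rabs (a - phi_re D e' x1 y1) <= 1 -> Rabs (b - phi_im D e' x1 y1) <= 1 -> U_region c e (a, b).
Proof.
  intros Hx1 Hr Ha Hb. apply Rabs_le_between in Ha. apply Rabs_le_between in Hb.
  set (r := rho x1 y1) in *.
  pose proof r_large_ge_1.
  pose proof (phi_re_ge D e' x1 y1 HD ltac:(lra) ltac:(lra)) as Hre. fold r ka in Hre.
  pose proof (Rabs_phi_im_le D e' x1 y1 HD ltac:(lra) ltac:(lra)) as Him. fold r in Him.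
  assert (Hbb : Rabs b <= (2 + D) * r).
  { assert (Rabs (b - phi_im D e' x1 y1) <= 1) by (apply Rabs_le; lra).
    pose proof (Rabs_triang (phi_im D e' x1 y1) (b - phi_im D e' x1 y1)) as T.
    replace (phi_im D e' x1 y1 + (b - phi_im D e' x1 y1)) with b in T by ring.
    pose proof (rho_ge_1 x1 y1 ltac:(lra)). fold r in H1. lra. }
  assert (Hsq : sqrt (1 + b ^ 2) <= (3 + D) * r).
  { rewrite <- (sqrt_square ((3 + D) * r)) by nra. apply sqrt_le_1_alt.
    assert (b ^ 2 <= ((2 + D) * r) ^ 2)
      by (rewrite <- (pow2_abs b); apply pow_incr; split; [apply Rabs_pos|auto]).
    simpl in *. nra. }
  assert (HK : Rpower (sqrt (1 + b ^ 2)) e <= K0 * Rpower r e).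
  { unfold K0. rewrite Rpower_mult_distr by lra. apply Rle_Rpower_l; [lra|].
    split; [|auto]. apply sqrt_lt_R0. pose proof (pow2_ge_0 b). lra. }
  apply U_region_of_Rpower_lt; [auto|lra|].
  pose proof (Rpower_gap r Hr). pose proof (Rmult_le_compat_l c _ _ (Rlt_le _ _ Hc) HK). lra.
Qed.

Lemma unit_squares_in_U_region : exists R0, forall x1 y1 a b, 0 < x1 ->
  R0 <= Cmod (phi_re D e' x1 y1, phi_im D e' x1 y1) ->
  Rabs (a - phi_re D e' x1 y1) <= 1 -> Rabs (b - phi_im D e' x1 y1) <= 1 -> U_region c e (a, b).
Proof.
  exists ((2 + 2 * D) * r_large). intros x1 y1 a b Hx1 HR Ha Hb.
  apply (U_region_of_near_phi x1 y1); auto.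
  pose proof (Cmod_phi_le D e' x1 y1 HD ltac:(lra) ltac:(lra)).
  apply Rmult_le_reg_l with (2 + 2 * D); lra.
Qed.

End LargerExponent.

Lemma powr_re_minus_tan_ge e x y y' : 0 < e < 1 -> 0 <= x -> 0 <= y <= y' ->
  0 <= cos (e * theta x y + (1 - e) * theta x y') <=
  powr_re e x y - tan ((1 - e) * theta x y') * powr_im e x y.
Proof.
  intros He Hx Hy. pose proof PI_RGT_0.
  set (be := e * theta x y). set (al := (1 - e) * theta x y').
  assert (Hbe : 0 <= be < e * (PI / 2)).
  { pose proof (theta_nonneg x y ltac:(lra) ltac:(lra)). pose proof (theta_bound x y).
    unfold be; split; [nra|apply Rmult_lt_compat_l; lra]. }
  assert (Hal : 0 <= al < (1 - e) * (PI / 2)).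
  { pose proof (theta_nonneg x y' ltac:(lra) ltac:(lra)). pose proof (theta_bound x y').
    unfold al; split; [nra|apply Rmult_lt_compat_l; lra]. }
  assert (Hcal : 0 < cos al) by (apply cos_gt_0; lra).
  assert (Hcba : 0 <= cos (be + al)) by (apply Rlt_le, cos_gt_0; nra).
  assert (Hid : powr_re e x y - tan al * powr_im e x y = Rpower (rho x y) e * (cos (be + al) / cos al)).
  { unfold powr_re, powr_im, tan. fold be. rewrite cos_plus. field. lra. }
  rewrite Hid. split; auto.
  pose proof (Rpower_rho_ge_1 e x y Hx ltac:(lra)). pose proof (COS_bound al).
  assert (cos (be + al) <= cos (be + al) / cos al).
  { apply Rmult_le_reg_r with (cos al); auto. unfold Rdiv. rewrite Rmult_assoc, Rinv_l by lra. nra. }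
  assert (0 <= cos (be + al) / cos al) by (apply Rdiv_le_0_compat; lra).
  nra.
Qed.

Section SameExponent.

Variables (c D e : R).
Hypotheses (Hc : 0 < c < D) (He : 0 < e < 1).

Section Point.

Variables (x1 y1 y' a b s : R).
Hypotheses (Hx1 : 0 < x1) (Hy1 : 0 <= y1).
Hypothesis Hlevel : phi_im c e x1 y' = b.
Hypothesis Ha : Rabs (a - phi_re D e x1 y1) <= s.
Hypothesis Hb : Rabs (b - phi_im D e x1 y1) <= s.

Lemma phi_re_lt_of_below : y' < y1 -> s * (1 + c * e) < (D - c) * cos (e * (PI / 2)) ->
  phi_re c e x1 y' < a.
Proof.
  intros Hy Hsmall.
  pose proof (proj1 (Rabs_le_between _ _) Ha) as Ha'. pose proof (proj1 (Rabs_le_between _ _) Hb) as Hb'.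
  pose proof (powr_im_le e x1 y' y1 He ltac:(lra) ltac:(lra)) as HI.
  pose proof (powr_re_plus_le e x1 y' y1 He ltac:(lra) ltac:(lra)) as HR.
  pose proof (powr_im_nonneg e x1 y1 ltac:(lra) ltac:(lra) Hy1) as HI1.
  assert (Hka : cos (e * (PI / 2)) <= powr_re e x1 y1).
  { unfold powr_re. pose proof (Rpower_rho_ge_1 e x1 y1 ltac:(lra) ltac:(lra)).
    pose proof (cos_mul_theta_ge e x1 y1 ltac:(lra)).
    pose proof (cos_mul_theta_pos e x1 y1 ltac:(lra)). nra. }
  unfold phi_re, phi_im in *.
  assert (Hd : y1 - y' <= s).
  { pose proof (Rmult_le_compat_l c _ _ (Rlt_le _ _ (proj1 Hc)) HI).
    assert (0 <= (D - c) * powr_im e x1 y1) by (apply Rmult_le_pos; lra). nra. }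
  assert (c * powr_re e x1 y' <= c * powr_re e x1 y1 + c * e * s).
  { assert (powr_re e x1 y' <= powr_re e x1 y1 + e * s) by nra.
    pose proof (Rmult_le_compat_l c _ _ (Rlt_le _ _ (proj1 Hc)) H). lra. }
  assert ((D - c) * cos (e * (PI / 2)) <= (D - c) * powr_re e x1 y1)
    by (apply Rmult_le_compat_l; lra).
  nra.
Qed.

Hypothesis Hy : y1 <= y'.

Let T := tan ((1 - e) * theta x1 y').

Lemma tan_level_angle_nonneg : 0 <= T.
Proof.
  pose proof PI_RGT_0. pose proof (theta_nonneg x1 y' ltac:(lra) ltac:(lra)).
  pose proof (theta_bound x1 y').
  unfold T. rewrite <- tan_0. apply tan_le; nra.
Qed.

Lemma phi_re_lt_of_above :
  s * (1 + T) < (D - c) * (powr_re e x1 y1 - T * powr_im e x1 y1) + T * (y' - y1) ->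
  phi_re c e x1 y' < a.
Proof.
  intros Hmain. pose proof tan_level_angle_nonneg as HT.
  pose proof (proj1 (Rabs_le_between _ _) Ha) as Ha'. pose proof (proj1 (Rabs_le_between _ _) Hb) as Hb'.
  pose proof (powr_re_minus_tan_le e x1 y1 y' He ltac:(lra) Hy) as Hmono. fold T in Hmono.
  unfold phi_re, phi_im in *.
  assert (Hdiff : c * (powr_im e x1 y' - powr_im e x1 y1) =
                  (D - c) * powr_im e x1 y1 + (b - (y1 + D * powr_im e x1 y1)) - (y' - y1)) by lra.
  assert (c * powr_re e x1 y' <= c * powr_re e x1 y1 + T * (c * (powr_im e x1 y' - powr_im e x1 y1))).
  { assert (powr_re e x1 y' <= powr_re e x1 y1 + T * (powr_im e x1 y' - powr_im e x1 y1)) by lra.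
    pose proof (Rmult_le_compat_l c _ _ (Rlt_le _ _ (proj1 Hc)) H). lra. }
  rewrite Hdiff in H.
  assert (T * (b - (y1 + D * powr_im e x1 y1)) <= T * s) by (apply Rmult_le_compat_l; lra).
  nra.
Qed.

Lemma above_margin_small_angle eta :
  e * theta x1 y1 + (1 - e) * theta x1 y' <= PI / 2 - eta -> 0 < eta ->
  0 < s -> s * (1 + tan ((1 - e) * (PI / 2))) <= (D - c) * sin eta / 2 ->
  s * (1 + T) < (D - c) * (powr_re e x1 y1 - T * powr_im e x1 y1) + T * (y' - y1).
Proof.
  intros Hangle Heta Hs Hsmall. pose proof PI_RGT_0. pose proof tan_level_angle_nonneg.
  destruct (powr_re_minus_tan_ge e x1 y1 y' He ltac:(lra) ltac:(lra)) as [_ Hge]. fold T in Hge.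
  assert (Hsin : sin eta <= cos (e * theta x1 y1 + (1 - e) * theta x1 y')).
  { pose proof (theta_nonneg x1 y1 ltac:(lra) Hy1). pose proof (theta_nonneg x1 y' ltac:(lra) ltac:(lra)).
    rewrite <- cos_shift. apply cos_decr_1; nra. }
  assert (HTL : T <= tan ((1 - e) * (PI / 2))).
  { pose proof (theta_bound x1 y'). pose proof (theta_nonneg x1 y' ltac:(lra) ltac:(lra)).
    apply tan_le; nra. }
  assert (0 <= T * (y' - y1)) by (apply Rmult_le_pos; lra).
  assert ((D - c) * sin eta <= (D - c) * (powr_re e x1 y1 - T * powr_im e x1 y1))
    by (apply Rmult_le_compat_l; lra).
  nra.
Qed.
Lemma above_margin_large_angle eta :
  PI / 2 - eta < e * theta x1 y1 + (1 - e) * theta x1 y' ->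
  0 < eta <= e * PI / 4 -> eta <= (1 - e) * PI / 4 -> 0 < s ->
  s * (tan ((1 - e) * PI / 4) + (1 + tan ((1 - e) * (PI / 2))) * (1 + c * e)) <=
    tan ((1 - e) * PI / 4) * (D - c) * sin (e * PI / 4) / 2 ->
  s * (1 + T) < (D - c) * (powr_re e x1 y1 - T * powr_im e x1 y1) + T * (y' - y1).
Proof.
  intros Hangle Heta Heta' Hs Hsmall. pose proof PI_RGT_0 as HPI. pose proof tan_level_angle_nonneg.
  set (T0 := tan ((1 - e) * PI / 4)). set (L := tan ((1 - e) * (PI / 2))).
  set (S0 := sin (e * PI / 4)). set (ce := 1 + c * e). fold T0 L S0 ce in Hsmall.
  pose proof (proj1 (Rabs_le_between _ _) Hb) as Hb'.
  destruct (powr_re_minus_tan_ge e x1 y1 y' He ltac:(lra) ltac:(lra)) as [Hge0 Hge]. fold T in Hge.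
  pose proof (theta_bound x1 y1). pose proof (theta_bound x1 y').
  assert (Hbe : e * PI / 4 <= e * theta x1 y1) by nra.
  assert (Hal : (1 - e) * PI / 4 <= (1 - e) * theta x1 y') by nra.
  assert (HT0 : 0 < T0) by (apply tan_gt_0; nra).
  assert (HT0T : T0 <= T) by (apply tan_le; nra).
  assert (HTL : T <= L) by (apply tan_le; nra).
  assert (HS0 : 0 < S0) by (apply sin_gt_0; nra).
  assert (HI1 : S0 <= powr_im e x1 y1).
  { unfold powr_im. pose proof (Rpower_rho_ge_1 e x1 y1 ltac:(lra) ltac:(lra)).
    assert (S0 <= sin (e * theta x1 y1)) by (apply sin_incr_1; nra). nra. }
  pose proof (phi_im_minus_le c e x1 y1 y' (proj1 Hc) He ltac:(lra) Hy) as Hmono.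
  rewrite Hlevel in Hmono. fold ce in Hmono. unfold phi_im in Hmono, Hb'.
  assert (Hce : 1 <= ce) by (unfold ce; nra).
  assert (Hdy : (D - c) * S0 - s <= ce * (y' - y1)) by nra.
  assert (HsS0 : s <= (D - c) * S0 / 2).
  { assert (0 <= (1 + L) * ce) by nra. nra. }
  assert (T0 * ((D - c) * S0 - s) <= T * (ce * (y' - y1))) by nra.
  assert (T * (y' - y1) > s * (1 + L)) by (apply Rmult_lt_reg_r with ce; nra).
  assert (0 <= (D - c) * (powr_re e x1 y1 - T * powr_im e x1 y1)) by nra.
  nra.
Qed.

End Point.

Let eta := Rmin e (1 - e) * PI / 4.

Lemma eta_bounds : 0 < eta /\ eta <= e * PI / 4 /\ eta <= (1 - e) * PI / 4.
Proof.
  pose proof PI_RGT_0. pose proof (Rmin_l e (1 - e)). pose proof (Rmin_r e (1 - e)).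
  unfold eta. repeat split; [apply Rmin_case|..]; nra.
Qed.

Lemma same_exponent_radius : exists s, 0 < s /\
  s * (1 + c * e) < (D - c) * cos (e * (PI / 2)) /\
  s * (1 + tan ((1 - e) * (PI / 2))) <= (D - c) * sin eta / 2 /\
  s * (tan ((1 - e) * PI / 4) + (1 + tan ((1 - e) * (PI / 2))) * (1 + c * e)) <=
    tan ((1 - e) * PI / 4) * (D - c) * sin (e * PI / 4) / 2.
Proof.
  pose proof PI_RGT_0 as HPI. destruct eta_bounds as (Heta & Heta1 & Heta2).
  set (K := D - c). assert (HK : 0 < K) by (unfold K; lra).
  set (ka := cos (e * (PI / 2))). assert (Hka : 0 < ka) by (apply cos_gt_0; nra).
  set (L := tan ((1 - e) * (PI / 2))). assert (HL : 0 <= L) by (apply Rlt_le, tan_gt_0; nra).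
  set (T0 := tan ((1 - e) * PI / 4)). assert (HT0 : 0 < T0) by (apply tan_gt_0; nra).
  set (S0 := sin (e * PI / 4)). assert (HS0 : 0 < S0) by (apply sin_gt_0; nra).
  assert (Hsin : 0 < sin eta) by (apply sin_gt_0; nra).
  set (ce := 1 + c * e). assert (Hce : 1 <= ce) by (unfold ce; nra).
  set (s1 := K * ka / (2 * ce)).
  set (s2 := K * sin eta / (2 * (1 + L))).
  set (s3 := T0 * K * S0 / (2 * (T0 + (1 + L) * ce))).
  assert (Hs1 : 0 < s1) by (apply Rdiv_lt_0_compat; nra).
  assert (Hs2 : 0 < s2) by (apply Rdiv_lt_0_compat; nra).
  assert (Hs3 : 0 < s3) by (apply Rdiv_lt_0_compat; [apply Rmult_lt_0_compat|]; nra).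
  exists (Rmin s1 (Rmin s2 s3)). set (s := Rmin s1 (Rmin s2 s3)).
  assert (Hs_1 : s <= s1) by apply Rmin_l.
  assert (Hs_2 : s <= s2) by (eapply Rle_trans; [apply Rmin_r|apply Rmin_l]).
  assert (Hs_3 : s <= s3) by (eapply Rle_trans; [apply Rmin_r|apply Rmin_r]).
  repeat split.
  - unfold s; repeat apply Rmin_case; auto.
  - apply Rle_lt_trans with (s1 * ce); [apply Rmult_le_compat_r; lra|].
    unfold s1. replace (K * ka / (2 * ce) * ce) with (K * ka / 2) by (field; lra).
    assert (0 < K * ka) by (apply Rmult_lt_0_compat; lra). lra.
  - apply Rle_trans with (s2 * (1 + L)); [apply Rmult_le_compat_r; lra|].
    unfold s2. right. field. lra.
  - apply Rle_trans with (s3 * (T0 + (1 + L) * ce)); [apply Rmult_le_compat_r; nra|].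
    unfold s3. right. field. nra.
Qed.

(* [y'] is where the level curve [phi_im c e = b] meets the vertical line through [x1]. *)
Lemma squares_in_U_region_same_exponent : exists s, 0 < s /\
  forall x1 y1 a b, 0 < x1 -> 0 <= y1 ->
  Rabs (a - phi_re D e x1 y1) <= s -> Rabs (b - phi_im D e x1 y1) <= s -> U_region c e (a, b).
Proof.
  destruct same_exponent_radius as (s & Hs & Hs_1 & Hs_2 & Hs_3).
  destruct eta_bounds as (Heta & Heta1 & Heta2).
  exists s. split; auto. intros x1 y1 a b Hx1 Hy1 Ha Hb.
  set (y' := im_level c e b x1).
  assert (Hlevel : phi_im c e x1 y' = b) by (apply phi_im_level; lra).
  apply (U_region_of_phi_re_lt c e a b x1 y'); try lra.
  destruct (Rlt_le_dec y' y1) as [Hbelow|Habove].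
  - apply (phi_re_lt_of_below x1 y1 y' a b s); auto.
  - apply (phi_re_lt_of_above x1 y1 y' a b s); auto.
    destruct (Rle_lt_dec (e * theta x1 y1 + (1 - e) * theta x1 y') (PI / 2 - eta)).
    + apply (above_margin_small_angle x1 y1 y' s Hx1 Hy1 Habove eta); auto.
    + apply (above_margin_large_angle x1 y1 y' b s Hx1 Hy1 Hlevel Hb Habove eta); auto.
Qed.

End SameExponent.

(** * Bounds on the derivative *)

Definition squares_inside (Cc eps D eps' s R0 : R) :=
  forall z, U_region D eps' z -> R0 <= Cmod z ->
  forall x y, Rabs (x - fst z) <= s -> Rabs (y - snd z) <= s -> U_region Cc eps (x, y).

Lemma U_region_conj c e a b : U_region c e (a, b) -> U_region c e (a, - b).
Proof.
  intros [[x y] [Hx E]]. simpl in Hx. exists (x, - y). split; [simpl; auto|].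
  rewrite phiCe_coords in * by lra. injection E; intros; subst.
  rewrite phi_re_opp, phi_im_opp. reflexivity.
Qed.

Lemma squares_inside_same_exponent Cc D eps : 0 < Cc < D -> 0 < eps < 1 ->
  exists s, 0 < s /\ squares_inside Cc eps D eps s 0.
Proof.
  intros Hc He. destruct (squares_in_U_region_same_exponent Cc D eps Hc He) as [s [Hs H]].
  exists s. split; auto.
  intros z [[x1 y1] [Hx1 ->]] _ a b Ha Hb. simpl in Hx1.
  rewrite phiCe_coords in Ha, Hb by lra. simpl in Ha, Hb.
  destruct (Rle_lt_dec 0 y1) as [Hy1|Hy1]; [apply (H x1 y1); auto|].
  replace b with (- - b) by ring. apply U_region_conj.
  apply (H x1 (- y1)); try lra.
  - rewrite phi_re_opp. auto.
  - rewrite phi_im_opp, <- Rabs_Ropp. replace (- (- b - - phi_im D eps x1 y1)) with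
      (b - phi_im D eps x1 y1) by ring. auto.
Qed.

Lemma squares_inside_larger_exponent Cc D eps eps' : 0 < Cc -> 0 < D -> 0 < eps ->
  eps < eps' -> eps' < 1 -> exists R0, squares_inside Cc eps D eps' 1 R0.
Proof.
  intros Hc HD He Hee' He'.
  destruct (unit_squares_in_U_region Cc D eps eps' Hc HD He Hee' He') as [R0 H].
  exists R0. intros z [[x1 y1] [Hx1 ->]] HR a b Ha Hb. simpl in Hx1.
  rewrite phiCe_coords in Ha, Hb, HR by lra. apply (H x1 y1); auto.
Qed.

Lemma Cmod_ge_of_square (z : C) x y s : Rabs (x - fst z) <= s -> Rabs (y - snd z) <= s ->
  Cmod z - 2 * s <= Cmod (x, y).
Proof.
  intros Hx Hy.
  assert (Cmod z <= Cmod (x, y) + Cmod (z - (x, y))%C).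
  { replace z with ((x, y) + (z - (x, y)))%C at 1 by ring. apply Cmod_triangle. }
  assert (Cmod (z - (x, y))%C <= 2 * s).
  { eapply Rle_trans; [apply Cmod_le_Rabs_sum|]. destruct z as [zx zy]; simpl in *.
    rewrite <- (Rabs_Ropp (zx + - x)), <- (Rabs_Ropp (zy + - y)).
    replace (- (zx + - x)) with (x - zx) by ring. replace (- (zy + - y)) with (y - zy) by ring.
    lra. }
  lra.
Qed.

Lemma exp_shift_le r s x x0 : Rabs (x - x0) <= s ->
  exp (- (r * x)) <= exp (Rabs r * s) * exp (- (r * x0)).
Proof.
  intros Hx. rewrite <- exp_plus.
  assert (Rabs (r * (x - x0)) <= Rabs r * s)
    by (rewrite Rabs_mult; apply Rmult_le_compat_l; [apply Rabs_pos|auto]).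
  pose proof (Rle_abs (- (r * (x - x0)))). rewrite Rabs_Ropp in H0.
  destruct (Req_dec (- (r * x)) (Rabs r * s + - (r * x0))) as [E|E]; [rewrite E; lra|].
  apply Rlt_le, exp_increasing. lra.
Qed.

Section DerivativeBounds.

Variables (Cc eps D eps' s R0 : R) (phi dphi : C -> C).
Hypothesis Hs : 0 < s.
Hypothesis Hsq : squares_inside Cc eps D eps' s R0.
Hypothesis Hder : forall z, U_region Cc eps z -> is_Cderive phi z (dphi z).

Lemma Cmod_derivative_le z M : U_region D eps' z -> R0 <= Cmod z ->
  (forall x y, Rabs (x - fst z) <= s -> Rabs (y - snd z) <= s -> Cmod (phi (x, y)) <= M) ->
  Cmod (dphi z) <= 4 * M / s.
Proof.
  intros Hz HR HM. destruct z as [x0 y0]. simpl in HM.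
  apply (Cauchy_estimate_square phi x0 y0 s M Hs); auto.
  - intros x y Hx Hy. exists (dphi (x, y)). apply Hder, (Hsq (x0, y0)); auto.
  - apply Hder, (Hsq (x0, y0)); auto; rewrite Rminus_eq_0, Rabs_R0; lra.
Qed.

Lemma derivative_bounded M : (forall z, U_region Cc eps z -> Cmod (phi z) <= M) ->
  forall z, U_region D eps' z -> R0 <= Cmod z -> Cmod (dphi z) <= 4 * M / s.
Proof.
  intros HM z Hz HR. apply Cmod_derivative_le; auto.
  intros x y Hx Hy. apply HM, (Hsq z); auto.
Qed.

Lemma derivative_decay r :
  (forall e, 0 < e -> exists R1, forall z, U_region Cc eps z -> R1 <= Cmod z ->
     Cmod (phi z) * exp (r * Re z) <= e) ->
  forall e, 0 < e -> exists R2, forall z, U_region D eps' z -> R2 <= Cmod z ->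
     Cmod (dphi z) * exp (r * Re z) <= e.
Proof.
  intros Hdecay e He.
  set (E := exp (Rabs r * s)). assert (HE : 0 < E) by apply exp_pos.
  set (e1 := e * s / (4 * E)). assert (He1 : 0 < e1) by (apply Rdiv_lt_0_compat; nra).
  destruct (Hdecay e1 He1) as [R1 HR1].
  exists (Rmax R0 (R1 + 2 * s)). intros z Hz HR.
  pose proof (Rmax_l R0 (R1 + 2 * s)). pose proof (Rmax_r R0 (R1 + 2 * s)).
  assert (Hb : Cmod (dphi z) <= 4 * (e1 * E * exp (- (r * Re z))) / s).
  { apply Cmod_derivative_le; auto; [lra|]. intros x y Hx Hy.
    pose proof (Cmod_ge_of_square z x y s Hx Hy).
    specialize (HR1 (x, y) (Hsq z Hz ltac:(lra) x y Hx Hy) ltac:(lra)). unfold Re in HR1; simpl in HR1.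
    pose proof (exp_shift_le r s x (Re z) Hx) as Hshift. fold E in Hshift.
    assert (Hphi : Cmod (phi (x, y)) <= e1 * exp (- (r * x))).
    { rewrite exp_Ropp. pose proof (exp_pos (r * x)).
      apply Rmult_le_reg_r with (exp (r * x)); auto.
      rewrite Rmult_assoc, Rinv_l by lra. lra. }
    pose proof (Rmult_le_compat_l e1 _ _ (Rlt_le _ _ He1) Hshift). lra. }
  pose proof (exp_pos (r * Re z)).
  apply Rmult_le_compat_r with (r := exp (r * Re z)) in Hb; [|lra].
  eapply Rle_trans; [exact Hb|]. right.
  rewrite exp_Ropp. unfold e1. field. split; lra.
Qed.

End DerivativeBounds.

Lemma squares_inside_exists Cc D eps eps' : 0 < eps -> eps <= eps' -> eps' < 1 -> 0 < Cc ->
  0 < D -> (eps < eps' \/ (eps' = eps /\ Cc < D)) ->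
  exists s R0, 0 < s /\ squares_inside Cc eps D eps' s R0.
Proof.
  intros He Hee' He' Hc HD [Hlt|[-> Hlt]].
  - destruct (squares_inside_larger_exponent Cc D eps eps' Hc HD He Hlt He') as [R0 H].
    exists 1, R0. split; [lra|auto].
  - destruct (squares_inside_same_exponent Cc D eps (conj Hc Hlt) (conj He He')) as [s [Hs H]].
    exists s, 0. auto.
Qed.

Theorem lemma9p1 (eps eps' Cc D : R) (phi dphi : C -> C) :
  0 < eps -> eps <= eps' -> eps' < 1 -> 0 < Cc -> 0 < D ->
  (eps < eps' \/ (eps' = eps /\ Cc < D)) ->
  (* phi is holomorphic on U_C^eps, with complex derivative dphi *)
  (forall z, U_region Cc eps z ->
     @is_derive C_AbsRing C_NormedModule phi z (dphi z)) ->
  (* (1) *)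
  (forall r : R,
     (forall e, 0 < e -> exists R0, forall z, U_region Cc eps z -> R0 <= Cmod z ->
        Cmod (phi z) * exp (r * Re z) <= e) ->
     (forall e, 0 < e -> exists R0, forall z, U_region D eps' z -> R0 <= Cmod z ->
        Cmod (dphi z) * exp (r * Re z) <= e))
  /\
  (* (2) *)
  ((exists M, forall z, U_region Cc eps z -> Cmod (phi z) <= M) ->
     (exists R0 M, forall z, U_region D eps' z -> R0 <= Cmod z -> Cmod (dphi z) <= M)
     /\ (eps' = eps -> exists M, forall z, U_region D eps' z -> Cmod (dphi z) <= M)).
Proof.
  intros He Hee' He' Hc HD Hcase Hder.
  destruct (squares_inside_exists Cc D eps eps' He Hee' He' Hc HD Hcase) as (s & R0 & Hs & Hsq).
  split.
  - exact (derivative_decay Cc eps D eps' s R0 phi dphi Hs Hsq Hder).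
  - intros [M HM]. split.
    + exists R0, (4 * M / s). exact (derivative_bounded Cc eps D eps' s R0 phi dphi Hs Hsq Hder M HM).
    + intros ->. destruct Hcase as [Hlt|[_ Hlt]]; [lra|].
      destruct (squares_inside_same_exponent Cc D eps (conj Hc Hlt) (conj He He'))
        as [s' [Hs' Hsq']].
      exists (4 * M / s'). intros z Hz.
      exact (derivative_bounded Cc eps D eps s' 0 phi dphi Hs' Hsq' Hder M HM z Hz (Cmod_ge_0 z)).
Qed.
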